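(* Let $T=(\mathcal L,\mathcal R)$ be a GT system and $\mathbf D\subseteq\mathcal G(\mathcal L)$. If all non-garbage critical pairs of $T$ with respect to $\mathbf D$ are strongly joinable, then $T$ is locally confluent on $\mathbf D$.
   Context: Fix a label alphabet $\mathcal L=(\mathcal L_V,\mathcal L_E)$ of finite sets. Graphs are totally labelled: $G=(V,E,s,t,l,m)$ with $V,E$ finite, $s,t:E\to V$, $l:V\to\mathcal L_V$, $m:E\to\mathcal L_E$ total; morphisms preserve sources, targets and labels; $\mathcal G(\mathcal L)$ is the set of isomorphism classes. $H$ is a subgraph of $G$ if there is an inclusion morphism $H\hookrightarrow G$. A rule $\langle L\leftarrow K\rightarrow R\rangle$ consists of such graphs with $K$ a subgraph of $L$ and $R$. A direct derivation $G\Rightarrow_{r,g}H$ uses an injective match $g:L\to G$ satisfying the dangling condition (no edge outside $g(L)$ incident to a node in $g(V_L\setminus V_K)$); it deletes $g(L\setminus K)$ giving $D\subseteq G$, then adds $R\setminus K$ disjointly giving $H\supseteq D$, with comatch $h:R\to H$. A GT system $T=(\mathcal L,\mathcal R)$ has a finite rule set. The track morphism of $G\Rightarrow H$ is the partial map $G\rightharpoonup H$ which is the identity (via $D$) on items of $D$ and undefined elsewhere; tracks of derivation sequences are composites. Steps $H_1\Leftarrow_{r_1,g_1}G\Rightarrow_{r_2,g_2}H_2$ are parallelly independent if $g_1(L_1)\cap g_2(L_2)\subseteq g_1(K_1)\cap g_2(K_2)$. Such a pair is a critical pair if $G=g_1(L_1)\cup g_2(L_2)$, the steps are not parallelly independent,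 and $g_1\ne g_2$ when $r_1=r_2$. Its persistent nodes are the nodes $v$ of $G$ for which both tracks $G\Rightarrow H_1$ and $G\Rightarrow H_2$ are defined. It is strongly joinable if there are a graph $M$ and derivations $H_1\Rightarrow^*M\Leftarrow^*H_2$ such that for every persistent node $v$, the tracks of $G\Rightarrow H_1\Rightarrow^*M$ and $G\Rightarrow H_2\Rightarrow^*M$ are both defined at $v$ and equal. A set $\mathbf D\subseteq\mathcal G(\mathcal L)$ is subgraph closed if $[G]\in\mathbf D$ and $H$ a subgraph of $G$ imply $[H]\in\mathbf D$; the subgraph closure $\overline{\mathbf D}$ is the smallest subgraph-closed set containing $\mathbf D$. A critical pair $H_1\Leftarrow G\Rightarrow H_2$ is non-garbage w.r.t. $\mathbf D$ if $[G]\in\overline{\mathbf D}$. Graphs $H_1,H_2$ are joinable if $H_1\Rightarrow^*M\Leftarrow^*H_2$ for some $M$. $T$ is locally confluent on $\mathbf D$ if for all $G$ with $[G]\in\mathbf D$, $H_1\Leftarrow G\Rightarrow H_2$ implies $H_1,H_2$ joinable. *)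

(* Graph transformation systems (double-pushout, injective matches). *)
From mathcomp Require Import all_boot.
Set Implicit Arguments. Unset Strict Implicit. Unset Printing Implicit Defensive.

Section GT.
Variables (LV LE : finType).

(* A finite totally labelled graph; nodes/edges are finite sets of nat names.
   Values of src/tgt/lab/mlab outside the node/edge sets are irrelevant junk. *)
Record graph := Graph {
  gV : seq nat; gE : seq nat;
  src : nat -> nat; tgt : nat -> nat;
  lab : nat -> LV; mlab : nat -> LE;
  graph_wf : forall e, e \in gE -> (src e \in gV) && (tgt e \in gV) }.

Definition morph (G H : graph) (fV fE : nat -> nat) : Prop :=
  (forall v, v \in gV G -> fV v \in gV H /\ lab H (fV v) = lab G v) /\
  (forall e, e \in gE G -> [/\ fE e \in gE H, src H (fE e) = fV (src G e),
                              tgt H (fE e) = fV (tgt G e) & mlab H (fE e) = mlab G e]).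

Definition inj_morph (G H : graph) (fV fE : nat -> nat) : Prop :=
  [/\ morph G H fV fE, {in gV G &, injective fV} & {in gE G &, injective fE}].

Definition iso_by (G H : graph) (fV fE : nat -> nat) : Prop :=
  [/\ inj_morph G H fV fE,
      (forall x, x \in gV H -> exists2 v, v \in gV G & fV v = x) &
      (forall x, x \in gE H -> exists2 e, e \in gE G & fE e = x)].

Definition iso (G H : graph) : Prop := exists fV fE, iso_by G H fV fE.

Definition subgraph (H G : graph) : Prop := morph H G id id.

Record rule := Rule {
  rL : graph; rK : graph; rR : graph;
  rule_KL : subgraph rK rL; rule_KR : subgraph rK rR }.

Definition delV (r : rule) (gv : nat -> nat) (x : nat) : bool :=
  has (fun v => (v \notin gV (rK r)) && (gv v == x)) (gV (rL r)).
Definition delE (r : rule) (ge : nat -> nat) (x : nat) : bool :=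
  has (fun e => (e \notin gE (rK r)) && (ge e == x)) (gE (rL r)).

(* items of the intermediate graph D *)
Definition inDV (r : rule) (G : graph) (gv : nat -> nat) (x : nat) : bool :=
  (x \in gV G) && ~~ delV r gv x.
Definition inDE (r : rule) (G : graph) (ge : nat -> nat) (x : nat) : bool :=
  (x \in gE G) && ~~ delE r ge x.

Definition dder (r : rule) (G H : graph) (gv ge hv he : nat -> nat) : Prop :=
  [/\ inj_morph (rL r) G gv ge,
      (forall e, e \in gE G -> ~~ has (fun e' => ge e' == e) (gE (rL r)) ->
         forall v, v \in gV (rL r) -> v \notin gV (rK r) ->
           src G e <> gv v /\ tgt G e <> gv v),
      (forall x, inDV r G gv x -> x \in gV H /\ lab H x = lab G x) /\
      (forall e, inDE r G ge e -> [/\ e \in gE H, src H e = src G e,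
                                     tgt H e = tgt G e & mlab H e = mlab G e]),
      inj_morph (rR r) H hv he /\
      (forall v, v \in gV (rK r) -> hv v = gv v) /\
      (forall e, e \in gE (rK r) -> he e = ge e) &
      [/\ (forall v, v \in gV (rR r) -> v \notin gV (rK r) -> ~~ inDV r G gv (hv v)),
          (forall e, e \in gE (rR r) -> e \notin gE (rK r) -> ~~ inDE r G ge (he e)),
          (forall x, x \in gV H -> inDV r G gv x \/
              exists2 v, v \in gV (rR r) & (v \notin gV (rK r)) && (hv v == x)) &
          (forall x, x \in gE H -> inDE r G ge x \/
              exists2 e, e \in gE (rR r) & (e \notin gE (rK r)) && (he e == x))]].

Definition step_track (r : rule) (G : graph) (gv : nat -> nat) : nat -> option nat :=
  fun x => if inDV r G gv x then Some x else None.

Record gts := GTS { gts_I : finType; gts_rule : gts_I -> rule }.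
Arguments gts_rule : clear implicits.

Definition dstep (T : gts) (G H : graph) : Prop :=
  exists (i : gts_I T) gv ge hv he, dder (gts_rule T i) G H gv ge hv he.

(* G =>* M with node track t (partial map on nodes); a derivation of
   length 0 is an isomorphism (graphs are considered up to isomorphism). *)
Inductive derivs (T : gts) : graph -> graph -> (nat -> option nat) -> Prop :=
| derivs_iso G H fV fE : iso_by G H fV fE ->
    derivs T G H (fun x => if x \in gV G then Some (fV x) else None)
| derivs_step (i : gts_I T) G H M gv ge hv he t :
    dder (gts_rule T i) G H gv ge hv he -> derivs T H M t ->
    derivs T G M (fun x => obind t (step_track (gts_rule T i) G gv x)).

Definition joinable (T : gts) (H1 H2 : graph) : Prop :=
  exists M t1 t2, derivs T H1 M t1 /\ derivs T H2 M t2.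

(* A set D of isomorphism classes is given by a predicate on graphs:
   [G] \in D  iff  G is isomorphic to some member of D. *)
Definition inD (D : graph -> Prop) (G : graph) : Prop :=
  exists2 G', D G' & iso G' G.

Inductive sclosure (D : graph -> Prop) : graph -> Prop :=
| scl_base G : inD D G -> sclosure D G
| scl_sub G H : sclosure D G -> subgraph H G -> sclosure D H
| scl_iso G H : sclosure D G -> iso G H -> sclosure D H.

Definition locally_confluent_on (T : gts) (D : graph -> Prop) : Prop :=
  forall G H1 H2, inD D G -> dstep T G H1 -> dstep T G H2 -> joinable T H1 H2.

Definition imV (L : graph) (gv : nat -> nat) (x : nat) : bool :=
  has (fun v => gv v == x) (gV L).
Definition imE (L : graph) (ge : nat -> nat) (x : nat) : bool :=
  has (fun e => ge e == x) (gE L).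

Definition par_indep (r1 r2 : rule) (g1v g1e g2v g2e : nat -> nat) : Prop :=
  (forall x, imV (rL r1) g1v x -> imV (rL r2) g2v x ->
     imV (rK r1) g1v x && imV (rK r2) g2v x) /\
  (forall x, imE (rL r1) g1e x -> imE (rL r2) g2e x ->
     imE (rK r1) g1e x && imE (rK r2) g2e x).

Definition critical_pair (T : gts) (i1 i2 : gts_I T) (G H1 H2 : graph)
    (g1v g1e h1v h1e g2v g2e h2v h2e : nat -> nat) : Prop :=
  [/\ dder (gts_rule T i1) G H1 g1v g1e h1v h1e,
      dder (gts_rule T i2) G H2 g2v g2e h2v h2e,
      (forall x, x \in gV G -> imV (rL (gts_rule T i1)) g1v x || imV (rL (gts_rule T i2)) g2v x) /\
      (forall x, x \in gE G -> imE (rL (gts_rule T i1)) g1e x || imE (rL (gts_rule T i2)) g2e x),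
      ~ par_indep (gts_rule T i1) (gts_rule T i2) g1v g1e g2v g2e &
      (i1 = i2 -> ~ ({in gV (rL (gts_rule T i1)), g1v =1 g2v} /\
                      {in gE (rL (gts_rule T i1)), g1e =1 g2e}))].

Definition persistent (T : gts) (i1 i2 : gts_I T) (G : graph) (g1v g2v : nat -> nat)
    (v : nat) : bool :=
  (v \in gV G) && inDV (gts_rule T i1) G g1v v && inDV (gts_rule T i2) G g2v v.

Definition strongly_joinable (T : gts) (i1 i2 : gts_I T) (G H1 H2 : graph)
    (g1v g2v : nat -> nat) : Prop :=
  exists M t1 t2, [/\ derivs T H1 M t1, derivs T H2 M t2 &
    forall v, persistent i1 i2 G g1v g2v v ->
      let tr1 := obind t1 (step_track (gts_rule T i1) G g1v v) in
      let tr2 := obind t2 (step_track (gts_rule T i2) G g2v v) in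
      tr1 <> None /\ tr1 = tr2].

End GT.

(** Take two direct derivations
    [H1 <= G => H2].  If they are parallelly independent, each match survives
    the other step and applying the remaining rule on both sides yields
    isomorphic graphs (local Church-Rosser).  If they use the same rule at the
    same match, [H1] and [H2] are isomorphic.  Otherwise restrict [G] to the
    union of the two match images: this subgraph carries a critical pair, which
    lies in the subgraph closure of [D] and is therefore strongly joinable by
    some [H1' =>* M <=* H2'].  Gluing the context of the critical pair (the
    items of [G] outside both matches) onto [M] along the common tracks of the
    persistent nodes, both joining derivations extend to derivations
    [H1 =>* Z <=* H2]: by the dangling condition, context edges only meet the
    critical pair in persistent nodes, and strong joinability makes the two
    tracks agree there. *)

From mathcomp Require Import all_boot.
From Stdlib Require Import Classical.
Set Implicit Arguments. Unset Strict Implicit. Unset Printing Implicit Defensive.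

Section Basics.
Variables (LV LE : finType).
Implicit Types (G H A B : graph LV LE) (r : rule LV LE).

Lemma K_sub_LV r v : v \in gV (rK r) -> v \in gV (rL r) /\ lab (rL r) v = lab (rK r) v.
Proof. by case: (rule_KL r) => hv _ /hv. Qed.
Lemma K_sub_RV r v : v \in gV (rK r) -> v \in gV (rR r) /\ lab (rR r) v = lab (rK r) v.
Proof. by case: (rule_KR r) => hv _ /hv. Qed.
Lemma K_sub_LE r e : e \in gE (rK r) -> [/\ e \in gE (rL r), src (rL r) e = src (rK r) e,
   tgt (rL r) e = tgt (rK r) e & mlab (rL r) e = mlab (rK r) e].
Proof. by case: (rule_KL r) => _ he /he. Qed.
Lemma K_sub_RE r e : e \in gE (rK r) -> [/\ e \in gE (rR r), src (rR r) e = src (rK r) e,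
   tgt (rR r) e = tgt (rK r) e & mlab (rR r) e = mlab (rK r) e].
Proof. by case: (rule_KR r) => _ he /he. Qed.

Lemma src_in G e : e \in gE G -> src G e \in gV G.
Proof. by move/graph_wf/andP=> []. Qed.
Lemma tgt_in G e : e \in gE G -> tgt G e \in gV G.
Proof. by move/graph_wf/andP=> []. Qed.

Section InjMorph.
Variables (A B : graph LV LE) (fV fE : nat -> nat).
Hypothesis Hf : inj_morph A B fV fE.

Lemma injm_V v : v \in gV A -> fV v \in gV B /\ lab B (fV v) = lab A v.
Proof. by case: Hf => [[H _] _ _] /H. Qed.
Lemma injm_E e : e \in gE A -> [/\ fE e \in gE B, src B (fE e) = fV (src A e),
                              tgt B (fE e) = fV (tgt A e) & mlab B (fE e) = mlab A e].
Proof. by case: Hf => [[_ H] _ _] /H. Qed.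
Lemma injm_injV : {in gV A &, injective fV}. Proof. by case: Hf. Qed.
Lemma injm_injE : {in gE A &, injective fE}. Proof. by case: Hf. Qed.
End InjMorph.

Lemma injm_comp A B (C : graph LV LE) f g f' g' :
  inj_morph A B f g -> inj_morph B C f' g' -> inj_morph A C (f' \o f) (g' \o g).
Proof.
move=> H1 H2; split; first split.
- move=> v vA; have [i1 i2] := injm_V H1 vA; have [j1 j2] := injm_V H2 i1.
  by rewrite /= j2 i2.
- move=> e eA; have [i1 i2 i3 i4] := injm_E H1 eA; have [j1 j2 j3 j4] := injm_E H2 i1.
  by rewrite /= j2 j3 j4 i2 i3 i4.
- move=> x y xA yA /(injm_injV H2 (injm_V H1 xA).1 (injm_V H1 yA).1).
  exact: (injm_injV H1 xA yA).
- move=> x y xA yA; have [i1 _ _ _] := injm_E H1 xA; have [j1 _ _ _] := injm_E H1 yA.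
  move/(injm_injE H2 i1 j1); exact: (injm_injE H1 xA yA).
Qed.

Lemma iso_by_id G : iso_by G G id id.
Proof. by split=> //; [split=> //; split=> // | move=> x xG; exists x | move=> x xG; exists x]. Qed.

Lemma imVP A f x : reflect (exists2 v, v \in gV A & f v = x) (imV A f x).
Proof. by apply: (iffP hasP) => [[v Hv /eqP]|[v Hv <-]]; exists v. Qed.
Lemma imEP A f x : reflect (exists2 v, v \in gE A & f v = x) (imE A f x).
Proof. by apply: (iffP hasP) => [[v Hv /eqP]|[v Hv <-]]; exists v. Qed.

Lemma imV_in A f v : v \in gV A -> imV A f (f v).
Proof. by move=> Hv; apply/imVP; exists v. Qed.
Lemma imE_in A f v : v \in gE A -> imE A f (f v).
Proof. by move=> Hv; apply/imEP; exists v. Qed.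

Lemma imV_id A y : imV A id y = (y \in gV A).
Proof. by apply/imVP/idP => [[v vL <-]|yL] //; exists y. Qed.
Lemma imE_id A y : imE A id y = (y \in gE A).
Proof. by apply/imEP/idP => [[v vL <-]|yL] //; exists y. Qed.

Lemma delVP r gv x :
  reflect (exists2 v, v \in gV (rL r) & (v \notin gV (rK r)) /\ gv v = x) (delV r gv x).
Proof.
apply: (iffP hasP) => [[v Hv /andP[H1 /eqP H2]]|[v Hv [H1 H2]]]; exists v => //.
by rewrite H1 H2 eqxx.
Qed.
Lemma delEP r ge x :
  reflect (exists2 e, e \in gE (rL r) & (e \notin gE (rK r)) /\ ge e = x) (delE r ge x).
Proof.
apply: (iffP hasP) => [[v Hv /andP[H1 /eqP H2]]|[v Hv [H1 H2]]]; exists v => //.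
by rewrite H1 H2 eqxx.
Qed.

Definition dangling r G (gv ge : nat -> nat) :=
  forall e, e \in gE G -> ~~ has (fun e' => ge e' == e) (gE (rL r)) ->
    forall v, v \in gV (rL r) -> v \notin gV (rK r) -> src G e <> gv v /\ tgt G e <> gv v.

Section Match.
Variables (r : rule LV LE) (G : graph LV LE) (gv ge : nat -> nat).
Hypothesis Hg : inj_morph (rL r) G gv ge.

Lemma K_notdelV v : v \in gV (rK r) -> ~~ delV r gv (gv v).
Proof.
move=> vK; apply/delVP=> [[w wL [wK e]]].
by move: wK; rewrite (injm_injV Hg wL (K_sub_LV vK).1 e) vK.
Qed.
Lemma K_notdelE e : e \in gE (rK r) -> ~~ delE r ge (ge e).
Proof.
move=> eK; apply/delEP=> [[w wL [wK e']]]; have [eL _ _ _] := K_sub_LE eK.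
by move: wK; rewrite (injm_injE Hg wL eL e') eK.
Qed.
Lemma K_inDV v : v \in gV (rK r) -> inDV r G gv (gv v).
Proof. by move=> vK; rewrite /inDV K_notdelV // (injm_V Hg (K_sub_LV vK).1).1. Qed.
Lemma K_inDE e : e \in gE (rK r) -> inDE r G ge (ge e).
Proof.
move=> eK; have [eL _ _ _] := K_sub_LE eK.
by rewrite /inDE K_notdelE // andbT; case: (injm_E Hg eL).
Qed.

Lemma LK_delV v : v \in gV (rL r) -> v \notin gV (rK r) -> delV r gv (gv v).
Proof. by move=> vL vK; apply/delVP; exists v. Qed.

(* The dangling condition is exactly what makes [D] a graph. *)
Lemma inDE_ends : dangling r G gv ge ->
  forall e, inDE r G ge e -> inDV r G gv (src G e) && inDV r G gv (tgt G e).
Proof.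
move=> Hd e /andP[eG ndel]; rewrite /inDV (src_in eG) (tgt_in eG) /=.
case: (boolP (has (fun e' => ge e' == e) (gE (rL r)))) => [/hasP[e' e'L /eqP ee']|nim].
  have e'K : e' \in gE (rK r) by apply: contraNT ndel => e'K; apply/delEP; exists e'.
  have [_ s1 t1 _] := K_sub_LE e'K; have [_ s2 t2 _] := injm_E Hg e'L.
  by rewrite -ee' s2 t2 s1 t1 !K_notdelV ?(src_in e'K) ?(tgt_in e'K).
by apply/andP; split; apply/delVP=> [[v vL [vK ev]]]; have [] := Hd _ eG nim _ vL vK; rewrite ev.
Qed.
End Match.

End Basics.

Definition finv (s : seq nat) (f : nat -> nat) y := nth 0 s (find (fun x => f x == y) s).

Lemma finv_spec s f y : has (fun x => f x == y) s -> finv s f y \in s /\ f (finv s f y) = y.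
Proof.
move=> Hh; have := nth_find 0 Hh; rewrite -/(finv s f y) => /eqP ->; split=> //.
by apply: mem_nth; rewrite -has_find.
Qed.
Lemma finv_f s f x : {in s &, injective f} -> x \in s -> finv s f (f x) = x.
Proof.
move=> inj xs; have Hh : has (fun z => f z == f x) s by apply/hasP; exists x.
by have [i1 i2] := finv_spec Hh; apply: inj.
Qed.

Definition fresh (s : seq nat) := (\max_(x <- s) x).+1.

Lemma fresh_notin s x : x \in s -> (fresh s <= x) = false.
Proof. by move=> xs; rewrite leqNgt ltnS (leq_bigmax_seq x). Qed.

Section Derivation.
Variables (LV LE : finType).
Implicit Types (G H : graph LV LE) (r : rule LV LE).

Definition RnewV r := [seq v <- gV (rR r) | v \notin gV (rK r)].
Definition RnewE r := [seq e <- gE (rR r) | e \notin gE (rK r)].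
Definition newV r (hv : nat -> nat) x := has (fun v => hv v == x) (RnewV r).
Definition newE r (he : nat -> nat) x := has (fun e => he e == x) (RnewE r).
Definition invV r := finv (RnewV r).
Definition invE r := finv (RnewE r).

Lemma newVP r hv x :
  reflect (exists2 v, v \in gV (rR r) & (v \notin gV (rK r)) /\ hv v = x) (newV r hv x).
Proof.
apply: (iffP hasP) => [[v]|[v vR [vK <-]]]; last by exists v; rewrite ?mem_filter ?vK.
by rewrite mem_filter => /andP[vK vR] /eqP; exists v.
Qed.
Lemma newEP r he x :
  reflect (exists2 e, e \in gE (rR r) & (e \notin gE (rK r)) /\ he e = x) (newE r he x).
Proof.
apply: (iffP hasP) => [[e]|[e eR [eK <-]]]; last by exists e; rewrite ?mem_filter ?eK.
by rewrite mem_filter => /andP[eK eR] /eqP; exists e.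
Qed.

Lemma invV_spec r hv x : newV r hv x ->
  [/\ invV r hv x \in gV (rR r), invV r hv x \notin gV (rK r) & hv (invV r hv x) = x].
Proof. by case/finv_spec; rewrite mem_filter => /andP[]. Qed.
Lemma invE_spec r he x : newE r he x ->
  [/\ invE r he x \in gE (rR r), invE r he x \notin gE (rK r) & he (invE r he x) = x].
Proof. by case/finv_spec; rewrite mem_filter => /andP[]. Qed.

Lemma invV_comatch r hv v : {in gV (rR r) &, injective hv} ->
  v \in gV (rR r) -> v \notin gV (rK r) -> invV r hv (hv v) = v.
Proof.
move=> inj vR vK; apply: finv_f; last by rewrite mem_filter vK.
by move=> x y; rewrite !mem_filter => /andP[_ xR] /andP[_ yR]; apply: inj.
Qed.
Lemma invE_comatch r he e : {in gE (rR r) &, injective he} ->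
  e \in gE (rR r) -> e \notin gE (rK r) -> invE r he (he e) = e.
Proof.
move=> inj eR eK; apply: finv_f; last by rewrite mem_filter eK.
by move=> x y; rewrite !mem_filter => /andP[_ xR] /andP[_ yR]; apply: inj.
Qed.

Section Dder.
Variables (r : rule LV LE) (G H : graph LV LE) (gv ge hv he : nat -> nat).
Hypothesis Hd : dder r G H gv ge hv he.

Lemma dder_match : inj_morph (rL r) G gv ge. Proof. by case: Hd. Qed.
Lemma dder_dangling : dangling r G gv ge. Proof. by case: Hd. Qed.
Lemma dder_DV x : inDV r G gv x -> x \in gV H /\ lab H x = lab G x.
Proof. by case: Hd => _ _ [H1 _] _ _; apply: H1. Qed.
Lemma dder_DE e : inDE r G ge e ->
  [/\ e \in gE H, src H e = src G e, tgt H e = tgt G e & mlab H e = mlab G e].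
Proof. by case: Hd => _ _ [_ H1] _ _; apply: H1. Qed.
Lemma dder_comatch : inj_morph (rR r) H hv he. Proof. by case: Hd => _ _ _ []. Qed.
Lemma dder_KV v : v \in gV (rK r) -> hv v = gv v.
Proof. by case: Hd => _ _ _ [_ [H1 _]] _; apply: H1. Qed.
Lemma dder_KE e : e \in gE (rK r) -> he e = ge e.
Proof. by case: Hd => _ _ _ [_ [_ H1]] _; apply: H1. Qed.

Lemma comatch_V v : v \in gV (rR r) -> hv v \in gV H /\ lab H (hv v) = lab (rR r) v.
Proof. exact: (injm_V dder_comatch). Qed.
Lemma comatch_E e : e \in gE (rR r) -> [/\ he e \in gE H, src H (he e) = hv (src (rR r) e),
                              tgt H (he e) = hv (tgt (rR r) e) & mlab H (he e) = mlab (rR r) e].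
Proof. exact: (injm_E dder_comatch). Qed.
Lemma comatch_injV : {in gV (rR r) &, injective hv}. Proof. exact: injm_injV dder_comatch. Qed.
Lemma comatch_injE : {in gE (rR r) &, injective he}. Proof. exact: injm_injE dder_comatch. Qed.

Lemma newV_notD x : newV r hv x -> ~~ inDV r G gv x.
Proof. by case: Hd => _ _ _ _ [H1 _ _ _] /newVP [v vR [vK <-]]; apply: H1. Qed.
Lemma newE_notD x : newE r he x -> ~~ inDE r G ge x.
Proof. by case: Hd => _ _ _ _ [_ H1 _ _] /newEP [v vR [vK <-]]; apply: H1. Qed.
Lemma dder_coverV x : x \in gV H -> inDV r G gv x || newV r hv x.
Proof.
case: Hd => _ _ _ _ [_ _ H1 _] /H1 [->//|[v vR /andP[vK /eqP <-]]].
by apply/orP; right; apply/newVP; exists v.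
Qed.
Lemma dder_coverE x : x \in gE H -> inDE r G ge x || newE r he x.
Proof.
case: Hd => _ _ _ _ [_ _ _ H1] /H1 [->//|[v vR /andP[vK /eqP <-]]].
by apply/orP; right; apply/newEP; exists v.
Qed.
Lemma newV_in x : newV r hv x -> x \in gV H.
Proof. by case/newVP=> v vR [_ <-]; exact: (comatch_V vR).1. Qed.
Lemma newE_in x : newE r he x -> x \in gE H.
Proof. by case/newEP=> v vR [_ <-]; have [] := comatch_E vR. Qed.
Lemma newV_comatch v : v \in gV (rR r) -> v \notin gV (rK r) -> newV r hv (hv v).
Proof. by move=> vR vK; apply/newVP; exists v. Qed.
Lemma newE_comatch e : e \in gE (rR r) -> e \notin gE (rK r) -> newE r he (he e).
Proof. by move=> eR eK; apply/newEP; exists e. Qed.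
Lemma K_notnewV v : v \in gV (rK r) -> ~~ newV r hv (hv v).
Proof.
move=> vK; apply: contraL (K_inDV dder_match vK) => Hn.
by rewrite -(dder_KV vK); apply: newV_notD.
Qed.
Lemma K_notnewE e : e \in gE (rK r) -> ~~ newE r he (he e).
Proof.
move=> eK; apply: contraL (K_inDE dder_match eK) => Hn.
by rewrite -(dder_KE eK); apply: newE_notD.
Qed.
Lemma dder_inDE_ends e : inDE r G ge e -> inDV r G gv (src G e) && inDV r G gv (tgt G e).
Proof. exact: inDE_ends dder_match dder_dangling e. Qed.
Lemma newE_ends e : newE r he e ->
  src H e = hv (src (rR r) (invE r he e)) /\ tgt H e = hv (tgt (rR r) (invE r he e)).
Proof. by case/invE_spec=> i1 _ i3; have [_ s t _] := comatch_E i1; rewrite -{1 3}i3. Qed.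
End Dder.

End Derivation.

Section Apply.
Variables (LV LE : finType) (r : rule LV LE) (G : graph LV LE) (gv ge : nat -> nat).
Hypothesis Hg : inj_morph (rL r) G gv ge.
Hypothesis Hdang : dangling r G gv ge.

(* The created items [R \ K] are renamed to [N + v] resp. [M + e], above every name of [G]. *)
Let N := fresh (gV G).
Let M := fresh (gE G).
Let hv0 v := if v \in gV (rK r) then gv v else N + v.
Let he0 e := if e \in gE (rK r) then ge e else M + e.
Let V0 := [seq x <- gV G | ~~ delV r gv x] ++ map (addn N) (RnewV r).
Let E0 := [seq x <- gE G | ~~ delE r ge x] ++ map (addn M) (RnewE r).
Let src0 e := if M <= e then hv0 (src (rR r) (e - M)) else src G e.
Let tgt0 e := if M <= e then hv0 (tgt (rR r) (e - M)) else tgt G e.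
Let lab0 x := if N <= x then lab (rR r) (x - N) else lab G x.
Let mlab0 x := if M <= x then mlab (rR r) (x - M) else mlab G x.

Let N_notinV x : x \in gV G -> (N <= x) = false. Proof. exact: fresh_notin. Qed.
Let M_notinE x : x \in gE G -> (M <= x) = false. Proof. exact: fresh_notin. Qed.
Let inDV_G x : inDV r G gv x -> x \in gV G. Proof. by case/andP. Qed.
Let inDE_G x : inDE r G ge x -> x \in gE G. Proof. by case/andP. Qed.
Let hv0_K v : v \in gV (rK r) -> hv0 v = gv v. Proof. by rewrite /hv0 => ->. Qed.
Let he0_K e : e \in gE (rK r) -> he0 e = ge e. Proof. by rewrite /he0 => ->. Qed.
Let hv0_new v : v \notin gV (rK r) -> hv0 v = N + v. Proof. by rewrite /hv0 => /negbTE->. Qed.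
Let he0_new e : e \notin gE (rK r) -> he0 e = M + e. Proof. by rewrite /he0 => /negbTE->. Qed.

Lemma mem_V0 x : (x \in V0) = inDV r G gv x || newV r (addn N) x.
Proof.
rewrite mem_cat mem_filter andbC; congr (_ || _).
by apply/mapP/hasP=> -[v vs E]; exists v; rewrite // ?E // (eqP E).
Qed.
Lemma mem_E0 x : (x \in E0) = inDE r G ge x || newE r (addn M) x.
Proof.
rewrite mem_cat mem_filter andbC; congr (_ || _).
by apply/mapP/hasP=> -[v vs E]; exists v; rewrite // ?E // (eqP E).
Qed.

Lemma hv0_in v : v \in gV (rR r) -> hv0 v \in V0.
Proof.
move=> vR; rewrite mem_V0; case: (boolP (v \in gV (rK r))) => vK.
  by rewrite hv0_K // (K_inDV Hg).
by rewrite hv0_new // newV_comatch ?orbT.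
Qed.

Lemma wf0 e : e \in E0 -> (src0 e \in V0) && (tgt0 e \in V0).
Proof.
rewrite mem_E0 => /orP[De|/newEP[v vR [_ <-]]].
  rewrite /src0 /tgt0 M_notinE ?inDE_G // !mem_V0.
  by case/andP: (inDE_ends Hg Hdang De) => -> ->.
by rewrite /src0 /tgt0 leq_addr addKn !hv0_in ?src_in ?tgt_in.
Qed.

Definition H0 := @Graph LV LE V0 E0 src0 tgt0 lab0 mlab0 wf0.

Lemma comatch0_morph : morph (rR r) H0 hv0 he0.
Proof.
split=> [v vR | e eR] /=.
  split; first exact: hv0_in.
  rewrite /lab0; case: (boolP (v \in gV (rK r))) => vK; last by rewrite hv0_new // leq_addr addKn.
  have [vL lL] := K_sub_LV vK; have [gvG lG] := injm_V Hg vL.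
  by rewrite hv0_K // N_notinV // lG lL (K_sub_RV vK).2.
case: (boolP (e \in gE (rK r))) => eK; last first.
  rewrite he0_new // /src0 /tgt0 /mlab0 leq_addr addKn; split=> //.
  by rewrite mem_E0 newE_comatch ?orbT.
have [eL s1 t1 l1] := K_sub_LE eK; have [_ s2 t2 l2] := K_sub_RE eK.
have [geG s3 t3 l3] := injm_E Hg eL.
rewrite he0_K // /src0 /tgt0 /mlab0 M_notinE // s3 t3 l3 s1 t1 s2 t2 l1 l2.
by rewrite !hv0_K ?src_in ?tgt_in // mem_E0 (K_inDE Hg).
Qed.

Lemma comatch0_injV : {in gV (rR r) &, injective hv0}.
Proof.
have lt_gv v : v \in gV (rK r) -> forall w, gv v <> N + w.
  move=> vK w E; have := N_notinV (injm_V Hg (K_sub_LV vK).1).1.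
  by rewrite E leq_addr.
move=> v w _ _; case: (boolP (v \in gV (rK r))) => vK; case: (boolP (w \in gV (rK r))) => wK.
- by rewrite !hv0_K //; apply: (injm_injV Hg); [exact: (K_sub_LV vK).1 | exact: (K_sub_LV wK).1].
- by rewrite (hv0_K vK) (hv0_new wK) => /lt_gv.
- by rewrite (hv0_new vK) (hv0_K wK) => /esym /lt_gv.
- by rewrite !hv0_new //; move/addnI.
Qed.

Lemma comatch0_injE : {in gE (rR r) &, injective he0}.
Proof.
have lt_ge e : e \in gE (rK r) -> forall f, ge e <> M + f.
  move=> eK f E; have [eL _ _ _] := K_sub_LE eK; have [geG _ _ _] := injm_E Hg eL.
  by have := M_notinE geG; rewrite E leq_addr.
move=> e f _ _; case: (boolP (e \in gE (rK r))) => eK; case: (boolP (f \in gE (rK r))) => fK.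
- by rewrite !he0_K //; apply: (injm_injE Hg); [case: (K_sub_LE eK) | case: (K_sub_LE fK)].
- by rewrite (he0_K eK) (he0_new fK) => /lt_ge.
- by rewrite (he0_new eK) (he0_K fK) => /esym /lt_ge.
- by rewrite !he0_new //; move/addnI.
Qed.

Lemma apply_dder : dder r G H0 gv ge hv0 he0.
Proof.
split=> //.
- split=> x Dx /=; first by rewrite mem_V0 Dx /lab0 N_notinV ?inDV_G.
  by rewrite mem_E0 Dx /src0 /tgt0 /mlab0 M_notinE ?inDE_G.
- split; first by split; [exact: comatch0_morph | exact: comatch0_injV | exact: comatch0_injE].
  by split; [exact: hv0_K | exact: he0_K].
- split.
  + move=> v _ vK; rewrite hv0_new //; apply/negP=> /inDV_G/N_notinV.
    by rewrite leq_addr.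
  + move=> e _ eK; rewrite he0_new //; apply/negP=> /inDE_G/M_notinE.
    by rewrite leq_addr.
  + move=> x /=; rewrite mem_V0 => /orP[->|/newVP[v vR [vK <-]]]; first by left.
    by right; exists v; rewrite // hv0_new // vK eqxx.
  + move=> x /=; rewrite mem_E0 => /orP[->|/newEP[e eR [eK <-]]]; first by left.
    by right; exists e; rewrite // he0_new // eK eqxx.
Qed.

End Apply.

Lemma dder_exists (LV LE : finType) (r : rule LV LE) G gv ge :
  inj_morph (rL r) G gv ge -> dangling r G gv ge -> exists H hv he, dder r G H gv ge hv he.
Proof. by move=> Hg Hd; do 3 eexists; exact: apply_dder Hg Hd. Qed.

Section Lift.
Variables (LV LE : finType) (r : rule LV LE) (X X1 Y Y1 : graph LV LE).
Variables (gv ge hv he gv' ge' hv' he' fV fE : nat -> nat).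
Hypothesis HX : dder r X X1 gv ge hv he.
Hypothesis HY : dder r Y Y1 gv' ge' hv' he'.
Hypothesis Hf : inj_morph X Y fV fE.
Hypothesis HgV : {in gV (rL r), forall v, gv' v = fV (gv v)}.
Hypothesis HgE : {in gE (rL r), forall v, ge' v = fE (ge v)}.

(* A step and the same step transported along [f : X -> Y]: [f] lifts to the
   results, as [f] on the kept items and through the comatches on created ones. *)
Definition liftV x := if newV r hv x then hv' (invV r hv x) else fV x.
Definition liftE x := if newE r he x then he' (invE r he x) else fE x.

Lemma liftV_D x : inDV r X gv x -> inDV r Y gv' (fV x) /\ liftV x = fV x.
Proof.
move=> Dx; split; last first.
  by rewrite /liftV; case: ifP => // /(newV_notD HX); rewrite Dx.
have xX : x \in gV X by case/andP: Dx.
rewrite /inDV (injm_V Hf xX).1 /=; apply/delVP => [[v vL [vK E]]].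
have gvX := (injm_V (dder_match HX) vL).1.
rewrite HgV // in E; have E' := injm_injV Hf gvX xX E.
by case/andP: Dx => _ /delVP; apply; exists v; last split.
Qed.
Lemma liftE_D x : inDE r X ge x -> inDE r Y ge' (fE x) /\ liftE x = fE x.
Proof.
move=> Dx; split; last first.
  by rewrite /liftE; case: ifP => // /(newE_notD HX); rewrite Dx.
have xX : x \in gE X by case/andP: Dx.
have [fx _ _ _] := injm_E Hf xX.
rewrite /inDE fx /=; apply/delEP => [[v vL [vK E]]].
have [gvX _ _ _] := injm_E (dder_match HX) vL.
rewrite HgE // in E; have E' := injm_injE Hf gvX xX E.
by case/andP: Dx => _ /delEP; apply; exists v; last split.
Qed.

Lemma liftV_comatch s : s \in gV (rR r) -> liftV (hv s) = hv' s.
Proof.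
move=> sR; case: (boolP (s \in gV (rK r))) => sK.
  rewrite /liftV (negbTE (K_notnewV HX sK)) (dder_KV HX sK) (dder_KV HY sK) HgV //.
  exact: (K_sub_LV sK).1.
rewrite /liftV (newV_comatch hv sR sK) invV_comatch //; exact: comatch_injV HX.
Qed.
Lemma liftE_comatch s : s \in gE (rR r) -> liftE (he s) = he' s.
Proof.
move=> sR; case: (boolP (s \in gE (rK r))) => sK.
  rewrite /liftE (negbTE (K_notnewE HX sK)) (dder_KE HX sK) (dder_KE HY sK) HgE //.
  by case: (K_sub_LE sK).
rewrite /liftE (newE_comatch he sR sK) invE_comatch //; exact: comatch_injE HX.
Qed.

Lemma liftV_new_notD x : newV r hv x -> ~~ inDV r Y gv' (liftV x).
Proof.
move=> /invV_spec[i1 i2 i3]; rewrite -i3 liftV_comatch //.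
exact: (newV_notD HY (newV_comatch hv' i1 i2)).
Qed.
Lemma liftE_new_notD x : newE r he x -> ~~ inDE r Y ge' (liftE x).
Proof.
move=> /invE_spec[i1 i2 i3]; rewrite -i3 liftE_comatch //.
exact: (newE_notD HY (newE_comatch he' i1 i2)).
Qed.

Lemma lift_injm : inj_morph X1 Y1 liftV liftE.
Proof.
split; first split.
- move=> x /(dder_coverV HX)/orP[Dx|/invV_spec[i1 i2 i3]].
    have [DY ->] := liftV_D Dx; have [-> ->] := dder_DV HY DY.
    by rewrite (injm_V Hf (_ : x \in gV X)).2 ?(dder_DV HX Dx).2 //; case/andP: Dx.
  by rewrite -i3 liftV_comatch // (comatch_V HY i1).1 (comatch_V HY i1).2 (comatch_V HX i1).2.
- move=> x /(dder_coverE HX)/orP[Dx|/invE_spec[i1 i2 i3]].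
    have [DY ->] := liftE_D Dx; have [-> -> -> ->] := dder_DE HY DY.
    have xX : x \in gE X by case/andP: Dx.
    have [_ -> -> ->] := injm_E Hf xX; have [_ -> -> ->] := dder_DE HX Dx.
    by case/andP: (dder_inDE_ends HX Dx) => /liftV_D[_ ->] /liftV_D[_ ->].
  rewrite -i3 liftE_comatch //.
  have [-> -> -> ->] := comatch_E HY i1; have [_ -> -> ->] := comatch_E HX i1.
  by rewrite !liftV_comatch ?src_in ?tgt_in.
- move=> x y /(dder_coverV HX)/orP[Dx|Nx] /(dder_coverV HX)/orP[Dy|Ny].
  + rewrite (liftV_D Dx).2 (liftV_D Dy).2.
    by apply: (injm_injV Hf); [case/andP: Dx | case/andP: Dy].
  + move=> E; have := liftV_new_notD Ny; rewrite -E (liftV_D Dx).2.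
    by rewrite (liftV_D Dx).1.
  + move=> E; have := liftV_new_notD Nx; rewrite E (liftV_D Dy).2.
    by rewrite (liftV_D Dy).1.
  + case/invV_spec: Nx => i1 i2 i3; case/invV_spec: Ny => j1 j2 j3.
    rewrite -i3 -j3 !liftV_comatch // => E; by rewrite (comatch_injV HY i1 j1 E).
- move=> x y /(dder_coverE HX)/orP[Dx|Nx] /(dder_coverE HX)/orP[Dy|Ny].
  + rewrite (liftE_D Dx).2 (liftE_D Dy).2.
    by apply: (injm_injE Hf); [case/andP: Dx | case/andP: Dy].
  + move=> E; have := liftE_new_notD Ny; rewrite -E (liftE_D Dx).2.
    by rewrite (liftE_D Dx).1.
  + move=> E; have := liftE_new_notD Nx; rewrite E (liftE_D Dy).2.
    by rewrite (liftE_D Dy).1.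
  + case/invE_spec: Nx => i1 i2 i3; case/invE_spec: Ny => j1 j2 j3.
    rewrite -i3 -j3 !liftE_comatch // => E; by rewrite (comatch_injE HY i1 j1 E).
Qed.

Lemma lift_coverV y : y \in gV Y1 -> imV X1 liftV y || (y \in gV Y) && ~~ imV X fV y.
Proof.
move=> /(dder_coverV HY)/orP[Dy|/invV_spec[i1 i2 i3]]; last first.
  apply/orP; left; apply/imVP; exists (hv (invV r hv' y)); last by rewrite liftV_comatch.
  exact: (newV_in HX (newV_comatch hv i1 i2)).
have yY : y \in gV Y by case/andP: Dy.
rewrite yY /=; case: (boolP (imV X fV y)) => [/imVP[x xX E]|]; last by rewrite orbT.
case: (boolP (inDV r X gv x)) => Dx.
  apply/orP; left; apply/imVP; exists x; first exact: (dder_DV HX Dx).1.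
  by rewrite (liftV_D Dx).2.
have : delV r gv x by move: Dx; rewrite /inDV xX /= negbK.
case/delVP=> v vL [vK E2]; case/andP: Dy => _ /delVP[]; exists v => //; split=> //.
by rewrite HgV // E2.
Qed.

Lemma lift_coverE y : y \in gE Y1 -> imE X1 liftE y || (y \in gE Y) && ~~ imE X fE y.
Proof.
move=> /(dder_coverE HY)/orP[Dy|/invE_spec[i1 i2 i3]]; last first.
  apply/orP; left; apply/imEP; exists (he (invE r he' y)); last by rewrite liftE_comatch.
  exact: (newE_in HX (newE_comatch he i1 i2)).
have yY : y \in gE Y by case/andP: Dy.
rewrite yY /=; case: (boolP (imE X fE y)) => [/imEP[x xX E]|]; last by rewrite orbT.
case: (boolP (inDE r X ge x)) => Dx.
  apply/orP; left; apply/imEP; exists x; first by case: (dder_DE HX Dx).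
  by rewrite (liftE_D Dx).2.
have : delE r ge x by move: Dx; rewrite /inDE xX /= negbK.
case/delEP=> v vL [vK E2]; case/andP: Dy => _ /delEP[]; exists v => //; split=> //.
by rewrite HgE // E2.
Qed.

Lemma lift_ctxV y : y \in gV Y -> ~~ imV X fV y ->
  [/\ inDV r Y gv' y, y \in gV Y1, lab Y1 y = lab Y y & ~~ imV X1 liftV y].
Proof.
move=> yY nim.
have Dy : inDV r Y gv' y.
  rewrite /inDV yY /=; apply/delVP=> [[v vL [vK E]]]; case/imVP: nim.
  exists (gv v); first exact: (injm_V (dder_match HX) vL).1.
  by rewrite -HgV.
have [i1 i2] := dder_DV HY Dy; split=> //.
apply/imVP=> [[x xX1 E]]; move: (dder_coverV HX xX1) => /orP[Dx|Nx].
  case/imVP: nim; exists x; first by case/andP: Dx.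
  by rewrite -(liftV_D Dx).2.
by have := liftV_new_notD Nx; rewrite E Dy.
Qed.

Lemma lift_ctxE y : y \in gE Y -> ~~ imE X fE y ->
  [/\ inDE r Y ge' y, y \in gE Y1, src Y1 y = src Y y /\ tgt Y1 y = tgt Y y,
      mlab Y1 y = mlab Y y & ~~ imE X1 liftE y].
Proof.
move=> yY nim.
have Dy : inDE r Y ge' y.
  rewrite /inDE yY /=; apply/delEP=> [[v vL [vK E]]]; case/imEP: nim.
  exists (ge v); first by case: (injm_E (dder_match HX) vL).
  by rewrite -HgE.
have [i1 i2 i3 i4] := dder_DE HY Dy; split=> //.
apply/imEP=> [[x xX1 E]]; move: (dder_coverE HX xX1) => /orP[Dx|Nx].
  case/imEP: nim; exists x; first by case/andP: Dx.
  by rewrite -(liftE_D Dx).2.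
by have := liftE_new_notD Nx; rewrite E Dy.
Qed.

End Lift.

Lemma same_match_iso (LV LE : finType) (r : rule LV LE) G H1 H2 g1v g1e h1v h1e g2v g2e h2v h2e :
  dder r G H1 g1v g1e h1v h1e -> dder r G H2 g2v g2e h2v h2e ->
  {in gV (rL r), g1v =1 g2v} -> {in gE (rL r), g1e =1 g2e} ->
  iso_by H1 H2 (liftV r h1v h2v id) (liftE r h1e h2e id).
Proof.
move=> d1 d2 Ev Ee.
have HgV : {in gV (rL r), forall v, g2v v = id (g1v v)} by move=> v vL; rewrite Ev.
have HgE : {in gE (rL r), forall v, g2e v = id (g1e v)} by move=> v vL; rewrite Ee.
have Hf : inj_morph G G id id by case: (iso_by_id G).
split; first exact: (lift_injm d1 d2 Hf HgV HgE).
  move=> y yH; case/orP: (lift_coverV d1 d2 Hf HgV yH) => [/imVP[x xH E]|/andP[yG]].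
    by exists x.
  by rewrite imV_id yG.
move=> y yH; case/orP: (lift_coverE d1 d2 Hf HgE yH) => [/imEP[x xH E]|/andP[yG]].
  by exists x.
by rewrite imE_id yG.
Qed.

Section Glue.
Variables (LV LE : finType).
Implicit Types (X Y M Z : graph LV LE).

(* [glue X Y M Z f t p c]: [Z] is [M] (embedded by [p]) together with a copy
   (via [c]) of the context of [f : X -> Y], i.e. the items of [Y] outside
   [f(X)]; a context edge ends in [p (t x)] when its end is [f x], so the
   context is attached to [M] along the partial node map [t : X -> M]. *)
Definition glue_end X (fV : nat -> nat) (t : nat -> option nat) (pV cV : nat -> nat) a b :=
  (~~ imV X fV a -> b = cV a) /\
  (forall x, x \in gV X -> fV x = a -> exists2 m, t x = Some m & b = pV m).

Record glue X Y M Z (fV fE : nat -> nat) (t : nat -> option nat) (pV pE cV cE : nat -> nat) :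
  Prop := Glue {
 gl_p : inj_morph M Z pV pE;
 gl_cV : forall y, y \in gV Y -> ~~ imV X fV y ->
   [/\ cV y \in gV Z, lab Z (cV y) = lab Y y & ~~ imV M pV (cV y)];
 gl_cVinj : forall y1 y2, y1 \in gV Y -> ~~ imV X fV y1 -> y2 \in gV Y -> ~~ imV X fV y2 ->
   cV y1 = cV y2 -> y1 = y2;
 gl_covV : forall z, z \in gV Z ->
   imV M pV z \/ exists2 y, (y \in gV Y) && ~~ imV X fV y & cV y = z;
 gl_cE : forall y, y \in gE Y -> ~~ imE X fE y ->
   [/\ cE y \in gE Z, mlab Z (cE y) = mlab Y y & ~~ imE M pE (cE y)];
 gl_cEinj : forall y1 y2, y1 \in gE Y -> ~~ imE X fE y1 -> y2 \in gE Y -> ~~ imE X fE y2 ->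
   cE y1 = cE y2 -> y1 = y2;
 gl_covE : forall z, z \in gE Z ->
   imE M pE z \/ exists2 y, (y \in gE Y) && ~~ imE X fE y & cE y = z;
 gl_ep : forall y, y \in gE Y -> ~~ imE X fE y ->
   glue_end X fV t pV cV (src Y y) (src Z (cE y)) /\ glue_end X fV t pV cV (tgt Y y) (tgt Z (cE y))
}.

Section GlueIso.
Variables (X Y M Z : graph LV LE) (a b fV fE pV pE cV cE : nat -> nat).
Hypothesis Hiso : iso_by X M a b.
Hypothesis Hf : inj_morph X Y fV fE.
Hypothesis Hgl : glue X Y M Z fV fE (fun x => if x \in gV X then Some (a x) else None) pV pE cV cE.

Let glueV y := if imV X fV y then pV (a (finv (gV X) fV y)) else cV y.
Let glueE y := if imE X fE y then pE (b (finv (gE X) fE y)) else cE y.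

Let Ha : inj_morph X M a b. Proof. by case: Hiso. Qed.
Let Hp : inj_morph M Z pV pE. Proof. by case: Hgl. Qed.

Let glueV_im x : x \in gV X -> glueV (fV x) = pV (a x).
Proof. by move=> xX; rewrite /glueV imV_in // finv_f //; exact: injm_injV Hf. Qed.
Let glueE_im x : x \in gE X -> glueE (fE x) = pE (b x).
Proof. by move=> xX; rewrite /glueE imE_in // finv_f //; exact: injm_injE Hf. Qed.
Let glueV_ctx y : ~~ imV X fV y -> glueV y = cV y.
Proof. by rewrite /glueV => /negbTE->. Qed.
Let glueE_ctx y : ~~ imE X fE y -> glueE y = cE y.
Proof. by rewrite /glueE => /negbTE->. Qed.

Let glue_end_glueV s z : s \in gV Y ->
  glue_end X fV (fun x => if x \in gV X then Some (a x) else None) pV cV s z -> z = glueV s.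
Proof.
move=> sY [h1 h2]; case: (boolP (imV X fV s)) => [/imVP[x xX E]|nim].
  by have [m] := h2 x xX E; rewrite xX => -[<-] ->; rewrite -E glueV_im.
by rewrite glueV_ctx // h1.
Qed.

Let glue_morph : morph Y Z glueV glueE.
Proof.
split=> y yY.
  case: (boolP (imV X fV y)) => [/imVP[x xX <-]|nim]; last first.
    by rewrite glueV_ctx //; have [-> -> _] := gl_cV Hgl yY nim.
  rewrite glueV_im //; have [i1 i2] := injm_V Ha xX; have [j1 j2] := injm_V Hp i1.
  by rewrite j1 j2 i2 (injm_V Hf xX).2.
case: (boolP (imE X fE y)) => [/imEP[x xX <-]|nim]; last first.
  rewrite glueE_ctx //; have [-> -> _] := gl_cE Hgl yY nim.
  have [es et] := gl_ep Hgl yY nim.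
  by rewrite -(glue_end_glueV (src_in yY) es) -(glue_end_glueV (tgt_in yY) et).
rewrite glueE_im //; have [i1 i2 i3 i4] := injm_E Ha xX; have [j1 j2 j3 j4] := injm_E Hp i1.
have [k1 k2 k3 k4] := injm_E Hf xX.
by rewrite j2 j3 j4 i2 i3 i4 k2 k3 k4 !glueV_im ?src_in ?tgt_in.
Qed.

Lemma glue_iso : iso_by Y Z glueV glueE.
Proof.
split; first split; first exact: glue_morph.
- move=> y1 y2 y1Y y2Y.
  case: (boolP (imV X fV y1)) => [/imVP[x1 x1X <-]|n1];
  case: (boolP (imV X fV y2)) => [/imVP[x2 x2X <-]|n2].
  + rewrite !glueV_im // => /(injm_injV Hp (injm_V Ha x1X).1 (injm_V Ha x2X).1).
    by move/(injm_injV Ha x1X x2X) ->.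
  + rewrite glueV_im // glueV_ctx // => E; have [_ _] := gl_cV Hgl y2Y n2.
    by rewrite -E imV_in // (injm_V Ha x1X).1.
  + rewrite glueV_im // glueV_ctx // => E; have [_ _] := gl_cV Hgl y1Y n1.
    by rewrite E imV_in // (injm_V Ha x2X).1.
  + by rewrite !glueV_ctx //; apply: (gl_cVinj Hgl).
- move=> y1 y2 y1Y y2Y.
  case: (boolP (imE X fE y1)) => [/imEP[x1 x1X <-]|n1];
  case: (boolP (imE X fE y2)) => [/imEP[x2 x2X <-]|n2].
  + have [i1 _ _ _] := injm_E Ha x1X; have [j1 _ _ _] := injm_E Ha x2X.
    rewrite !glueE_im // => /(injm_injE Hp i1 j1).
    by move/(injm_injE Ha x1X x2X) ->.
  + have [i1 _ _ _] := injm_E Ha x1X.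
    rewrite glueE_im // glueE_ctx // => E; have [_ _] := gl_cE Hgl y2Y n2.
    by rewrite -E imE_in.
  + have [i1 _ _ _] := injm_E Ha x2X.
    rewrite glueE_im // glueE_ctx // => E; have [_ _] := gl_cE Hgl y1Y n1.
    by rewrite E imE_in.
  + by rewrite !glueE_ctx //; apply: (gl_cEinj Hgl).
- move=> z /(gl_covV Hgl) [/imVP[m mM <-]|[y /andP[yY nim] <-]].
    case: Hiso => _ /(_ m mM)[x xX <-] _.
    by exists (fV x); [exact: (injm_V Hf xX).1 | rewrite glueV_im].
  by exists y; rewrite // glueV_ctx.
- move=> z /(gl_covE Hgl) [/imEP[m mM <-]|[y /andP[yY nim] <-]].
    case: Hiso => _ _ /(_ m mM)[x xX <-].
    by exists (fE x); [by case: (injm_E Hf xX) | rewrite glueE_im].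
  by exists y; rewrite // glueE_ctx.
Qed.
End GlueIso.

Section GlueStep.
Variables (r : rule LV LE) (X X1 Y M Z : graph LV LE).
Variables (gv ge hv he fV fE pV pE cV cE : nat -> nat) (t : nat -> option nat).
Hypothesis dd : dder r X X1 gv ge hv he.
Hypothesis Hf : inj_morph X Y fV fE.
Hypothesis Hgl : glue X Y M Z fV fE (fun x => obind t (step_track r X gv x)) pV pE cV cE.

(* A context edge at a deleted node would need the track to be defined there. *)
Lemma glue_dangling : dangling r Y (fV \o gv) (fE \o ge).
Proof.
move=> e eY nh v vL vK; have gvX := (injm_V (dder_match dd) vL).1.
case: (boolP (imE X fE e)) => [/imEP[e0 e0X Ee]|nim].
  have nh0 : ~~ has (fun e' => ge e' == e0) (gE (rL r)).
    by apply: contra nh => /hasP[e' e'L /eqP E]; apply/hasP; exists e'; rewrite //= E Ee.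
  have [s t'] := dder_dangling dd e0X nh0 vL vK.
  rewrite -Ee; have [_ -> -> _] := injm_E Hf e0X.
  by split=> /(injm_injV Hf _ gvX) => [/(_ (src_in e0X))|/(_ (tgt_in e0X))].
have [[_ h1] [_ h2]] := gl_ep Hgl eY nim.
have undef m : obind t (step_track r X gv (gv v)) = Some m -> False.
  by rewrite /step_track /inDV (LK_delV gv vL vK) andbF.
by split=> E; [case: (h1 _ gvX (esym E)) | case: (h2 _ gvX (esym E))] => m /undef.
Qed.

Variables (Y1 : graph LV LE) (hv' he' : nat -> nat).
Hypothesis dY : dder r Y Y1 (fV \o gv) (fE \o ge) hv' he'.

Let HgV : {in gV (rL r), forall v, (fV \o gv) v = fV (gv v)}. Proof. by []. Qed.
Let HgE : {in gE (rL r), forall e, (fE \o ge) e = fE (ge e)}. Proof. by []. Qed.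
Let F1V := liftV r hv hv' fV.
Let F1E := liftE r he he' fE.

Lemma glue_step_injm : inj_morph X1 Y1 F1V F1E.
Proof. exact: lift_injm dd dY Hf HgV HgE. Qed.

Let ctx1V y : y \in gV Y1 -> ~~ imV X1 F1V y -> (y \in gV Y) && ~~ imV X fV y.
Proof. by move=> yY /negbTE nim; have := lift_coverV dd dY Hf HgV yY; rewrite -/F1V nim. Qed.
Let ctx1E y : y \in gE Y1 -> ~~ imE X1 F1E y -> (y \in gE Y) && ~~ imE X fE y.
Proof. by move=> yY /negbTE nim; have := lift_coverE dd dY Hf HgE yY; rewrite -/F1E nim. Qed.

Let glue_end_step s z : inDV r Y (fV \o gv) s ->
  glue_end X fV (fun x => obind t (step_track r X gv x)) pV cV s z -> glue_end X1 F1V t pV cV s z.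
Proof.
move=> Ds [h1 h2]; split.
  move=> nim1; apply: h1; apply: contra nim1 => /imVP[x xX E].
  have [m] := h2 x xX E; rewrite /step_track; case: ifP => // Dx _ _.
  apply/imVP; exists x; first exact: (dder_DV dd Dx).1.
  by rewrite /F1V (liftV_D hv' dd Hf HgV Dx).2.
move=> x xX1 E; case/orP: (dder_coverV dd xX1) => [Dx|Nx].
  have [_ E2] := liftV_D hv' dd Hf HgV Dx; have xX : x \in gV X by case/andP: Dx.
  have [m] := h2 x xX (etrans (esym E2) E); rewrite /step_track Dx /= => -> ->.
  by exists m.
by have := liftV_new_notD dd dY HgV Nx; rewrite -/F1V E Ds.
Qed.

Lemma glue_step : glue X1 Y1 M Z F1V F1E t pV pE cV cE.
Proof.
have ctxV := lift_ctxV dd dY Hf HgV; have ctxE := lift_ctxE dd dY Hf HgE.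
split.
- exact: gl_p Hgl.
- move=> y yY1 /(ctx1V yY1)/andP[yY nim].
  by have [c1 c2 c3] := gl_cV Hgl yY nim; have [_ _ -> _] := ctxV y yY nim.
- move=> y1 y2 y1Y /(ctx1V y1Y)/andP[a1 b1] y2Y /(ctx1V y2Y)/andP[a2 b2].
  exact: (gl_cVinj Hgl).
- move=> z /(gl_covV Hgl)[->|[y /andP[yY nim] <-]]; first by left.
  by right; exists y => //; have [_ -> _ ->] := ctxV y yY nim.
- move=> y yY1 /(ctx1E yY1)/andP[yY nim].
  by have [c1 c2 c3] := gl_cE Hgl yY nim; have [_ _ _ -> _] := ctxE y yY nim.
- move=> y1 y2 y1Y /(ctx1E y1Y)/andP[a1 b1] y2Y /(ctx1E y2Y)/andP[a2 b2].
  exact: (gl_cEinj Hgl).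
- move=> z /(gl_covE Hgl)[->|[y /andP[yY nim] <-]]; first by left.
  by right; exists y => //; have [_ -> _ _ ->] := ctxE y yY nim.
- move=> y yY1 /(ctx1E yY1)/andP[yY nim].
  have [Dy _ [-> ->] _ _] := ctxE y yY nim; have [e1 e2] := gl_ep Hgl yY nim.
  by case/andP: (dder_inDE_ends dY Dy) => Ds Dt; split; apply: glue_end_step.
Qed.
End GlueStep.

Lemma derivs_extend (T : gts LV LE) X M t : derivs T X M t ->
  forall Y Z fV fE pV pE cV cE, inj_morph X Y fV fE ->
  glue X Y M Z fV fE t pV pE cV cE -> exists t', derivs T Y Z t'.
Proof.
elim=> {X M t} [X M a b Hiso | i X X1 M gv ge hv he t dd _ IH] Y Z fV fE pV pE cV cE Hf Hgl.
  by eexists; apply: derivs_iso; exact: (glue_iso Hiso Hf Hgl).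
have [Y1 [hv' [he' dY]]] := dder_exists (injm_comp (dder_match dd) Hf) (glue_dangling dd Hf Hgl).
have [t' Hd'] := IH _ _ _ _ _ _ _ _ (glue_step_injm dd Hf dY) (glue_step dd Hf Hgl dY).
by eexists; apply: derivs_step dY Hd'.
Qed.

End Glue.

Section Restrict.
Variables (LV LE : finType).
Implicit Types (X M : graph LV LE).

Section Restriction.
Variables (G : graph LV LE) (pV pE : pred nat).
Hypothesis hG : forall e, e \in gE G -> pE e -> pV (src G e) && pV (tgt G e).

Lemma restrict_wf e : e \in [seq e <- gE G | pE e] ->
  (src G e \in [seq x <- gV G | pV x]) && (tgt G e \in [seq x <- gV G | pV x]).
Proof.
rewrite !mem_filter => /andP[pe eG]; case/andP: (hG eG pe) => -> ->.
by rewrite src_in ?tgt_in.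
Qed.
Definition restrict := @Graph LV LE [seq x <- gV G | pV x] [seq e <- gE G | pE e]
   (src G) (tgt G) (lab G) (mlab G) restrict_wf.
Lemma restrict_sub : subgraph restrict G.
Proof. by split=> x; rewrite /= mem_filter => /andP[_ ->]. Qed.
End Restriction.

Section RestrictStep.
Variables (r : rule LV LE) (G H : graph LV LE) (gv ge hv he : nat -> nat).
Hypothesis dd : dder r G H gv ge hv he.
Variables (pV pE : pred nat).
Hypothesis hG : forall e, e \in gE G -> pE e -> pV (src G e) && pV (tgt G e).
Hypothesis HpV : {in gV (rL r), forall v, pV (gv v)}.
Hypothesis HpE : {in gE (rL r), forall v, pE (ge v)}.

Definition keepV x := inDV r G gv x && pV x || newV r hv x.
Definition keepE x := inDE r G ge x && pE x || newE r he x.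

Lemma keepV_comatch s : s \in gV (rR r) -> keepV (hv s).
Proof.
move=> sR; rewrite /keepV; case: (boolP (s \in gV (rK r))) => sK.
  by rewrite (dder_KV dd sK) (K_inDV (dder_match dd) sK) HpV // (K_sub_LV sK).1.
by rewrite (newV_comatch hv sR sK) orbT.
Qed.
Lemma keepE_comatch s : s \in gE (rR r) -> keepE (he s).
Proof.
move=> sR; rewrite /keepE; case: (boolP (s \in gE (rK r))) => sK.
  by rewrite (dder_KE dd sK) (K_inDE (dder_match dd) sK) HpE //; case: (K_sub_LE sK).
by rewrite (newE_comatch he sR sK) orbT.
Qed.

Lemma keep_wf e : e \in gE H -> keepE e -> keepV (src H e) && keepV (tgt H e).
Proof.
move=> eH /orP[/andP[De pe]|Ne].
  have [_ -> -> _] := dder_DE dd De; case/andP: (dder_inDE_ends dd De) => Ds Dt.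
  have eG : e \in gE G by case/andP: De.
  by rewrite /keepV Ds Dt; case/andP: (hG eG pe) => -> ->.
have [-> ->] := newE_ends dd Ne; have [i1 _ _] := invE_spec Ne.
by rewrite !keepV_comatch ?src_in ?tgt_in.
Qed.

Definition Hres := restrict keep_wf.

Lemma restrict_dder : dder r (restrict hG) Hres gv ge hv he.
Proof.
have [[mV mE] iV iE] := dder_match dd.
have inDr x : inDV r (restrict hG) gv x = inDV r G gv x && pV x.
  by rewrite /inDV /= mem_filter; case: (pV x); case: (x \in gV G); rewrite ?andbT ?andbF.
have inDEr x : inDE r (restrict hG) ge x = inDE r G ge x && pE x.
  by rewrite /inDE /= mem_filter; case: (pE x); case: (x \in gE G); rewrite ?andbT ?andbF.
split=> //.
- split; first split.
  + by move=> v vL /=; rewrite mem_filter HpV //; have [-> ->] := mV v vL.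
  + by move=> e eL /=; rewrite mem_filter HpE //; have [-> -> -> ->] := mE e eL.
  + exact: iV.
  + exact: iE.
- move=> e /=; rewrite mem_filter => /andP[_ eG] nh v vL vK.
  exact: (dder_dangling dd eG nh vL vK).
- split=> x; rewrite ?inDr ?inDEr => /andP[Dx px] /=; rewrite mem_filter /keepV /keepE ?Dx ?px /=.
    by have [-> ->] := dder_DV dd Dx.
  by have [-> -> -> ->] := dder_DE dd Dx.
- split; last by split; [move=> v vK; apply: (dder_KV dd vK) | move=> v vK; apply: (dder_KE dd vK)].
  have [[cV cE] jV jE] := dder_comatch dd.
  split; first split.
  + by move=> v vR /=; rewrite mem_filter keepV_comatch //; have [-> ->] := cV v vR.
  + by move=> e eR /=; rewrite mem_filter keepE_comatch //; have [-> -> -> ->] := cE e eR.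
  + exact: jV.
  + exact: jE.
- split.
  + move=> v vR vK; rewrite inDr; apply/negP=> /andP[D _].
    by have := newV_notD dd (newV_comatch hv vR vK); rewrite D.
  + move=> v vR vK; rewrite inDEr; apply/negP=> /andP[D _].
    by have := newE_notD dd (newE_comatch he vR vK); rewrite D.
  + move=> x /=; rewrite mem_filter => /andP[/orP[Dx|/newVP[v vR [vK E]]] _].
      by left; rewrite inDr.
    by right; exists v; rewrite // vK E eqxx.
  + move=> x /=; rewrite mem_filter => /andP[/orP[Dx|/newEP[v vR [vK E]]] _].
      by left; rewrite inDEr.
    by right; exists v; rewrite // vK E eqxx.
Qed.

Lemma Hres_incl : inj_morph Hres H id id.
Proof. by split=> //; exact: restrict_sub. Qed.

End RestrictStep.

Lemma derivs_track_in (T : gts LV LE) X M t x m : derivs T X M t -> t x = Some m -> m \in gV M.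
Proof.
move=> dX; elim: dX x => {X M t} [X M a b Hiso | i X X1 M gv ge hv he t dd _ IH] x.
  case: ifP => // xX [<-]; case: Hiso => Ha _ _.
  exact: (injm_V Ha xX).1.
rewrite /step_track; case: ifP => //= _; exact: IH.
Qed.

End Restrict.

Lemma par_indep_sym (LV LE : finType) (r1 r2 : rule LV LE) g1v g1e g2v g2e :
  par_indep r1 r2 g1v g1e g2v g2e -> par_indep r2 r1 g2v g2e g1v g1e.
Proof. by case=> h1 h2; split=> x a b; rewrite andbC; [apply: h1|apply: h2]. Qed.

Section ParIndep.
Variables (LV LE : finType) (r1 r2 : rule LV LE) (G H1 : graph LV LE).
Variables (g1v g1e h1v h1e g2v g2e : nat -> nat).
Hypothesis d1 : dder r1 G H1 g1v g1e h1v h1e.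
Hypothesis m2 : inj_morph (rL r2) G g2v g2e.
Hypothesis dang2 : dangling r2 G g2v g2e.
Hypothesis Hpi : par_indep r1 r2 g1v g1e g2v g2e.

Lemma indep_notdelV x : imV (rL r2) g2v x -> ~~ delV r1 g1v x.
Proof.
move=> im2; apply/delVP=> [[v vL [vK E]]].
have im1 : imV (rL r1) g1v x by rewrite -E imV_in.
case: Hpi => /(_ x im1 im2)/andP[/imVP[w wK E2] _] _.
have wL := (K_sub_LV wK).1.
by move: vK; rewrite (injm_injV (dder_match d1) vL wL (etrans E (esym E2))) wK.
Qed.
Lemma indep_notdelE x : imE (rL r2) g2e x -> ~~ delE r1 g1e x.
Proof.
move=> im2; apply/delEP=> [[v vL [vK E]]].
have im1 : imE (rL r1) g1e x by rewrite -E imE_in.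
case: Hpi => _ /(_ x im1 im2)/andP[/imEP[w wK E2] _].
have [wL _ _ _] := K_sub_LE wK.
by move: vK; rewrite (injm_injE (dder_match d1) vL wL (etrans E (esym E2))) wK.
Qed.
Lemma indep_inDV v : v \in gV (rL r2) -> inDV r1 G g1v (g2v v).
Proof. by move=> vL; rewrite /inDV (injm_V m2 vL).1 indep_notdelV // imV_in. Qed.
Lemma indep_inDE v : v \in gE (rL r2) -> inDE r1 G g1e (g2e v).
Proof. by move=> vL; have [i _ _ _] := injm_E m2 vL; rewrite /inDE i indep_notdelE // imE_in. Qed.

Lemma indep_match : inj_morph (rL r2) H1 g2v g2e.
Proof.
have [[mV mE] iV iE] := m2.
split=> //; split.
- move=> v vL; have [i1 i2] := dder_DV d1 (indep_inDV vL).
  by rewrite i1 i2 (mV v vL).2.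
- move=> e eL; have [i1 i2 i3 i4] := dder_DE d1 (indep_inDE eL).
  by rewrite i1 i2 i3 i4; have [_ -> -> ->] := mE e eL.
Qed.

Lemma indep_dangling : dangling r2 H1 g2v g2e.
Proof.
move=> e eH nh v vL vK.
have gD := indep_inDV vL.
case/orP: (dder_coverE d1 eH) => [De|Ne].
  have [_ -> -> _] := dder_DE d1 De.
  by apply: dang2 vL vK => //; case/andP: De.
have [-> ->] := newE_ends d1 Ne; have [i1 i2 i3] := invE_spec Ne.
have H s : s \in gV (rR r1) -> h1v s <> g2v v.
  move=> sR; case: (boolP (s \in gV (rK r1))) => sK.
    rewrite (dder_KV d1 sK) => E.
    have im1 : imV (rL r1) g1v (g2v v) by rewrite -E imV_in // (K_sub_LV sK).1.
    case: Hpi => /(_ _ im1 (imV_in _ vL))/andP[_ /imVP[w wK E2]] _.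
    by move: vK; rewrite -(injm_injV m2 (K_sub_LV wK).1 vL E2) wK.
  move=> E; have := newV_notD d1 (newV_comatch h1v sR sK).
  by rewrite E gD.
by split; apply: H; rewrite ?src_in ?tgt_in.
Qed.
End ParIndep.

Section IndepSequence.
Variables (LV LE : finType) (r1 r2 : rule LV LE) (G H1 H2 M1 : graph LV LE).
Variables (g1v g1e h1v h1e g2v g2e h2v h2e k2v k2e : nat -> nat).
Hypothesis d1 : dder r1 G H1 g1v g1e h1v h1e.
Hypothesis d2 : dder r2 G H2 g2v g2e h2v h2e.
Hypothesis Hpi : par_indep r1 r2 g1v g1e g2v g2e.
Hypothesis dY : dder r2 H1 M1 g2v g2e k2v k2e.

Definition commonV x := inDV r1 G g1v x && ~~ delV r2 g2v x.
Definition commonE x := inDE r1 G g1e x && ~~ delE r2 g2e x.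

Let Hpi' := par_indep_sym Hpi.

Lemma comatch1_notdelV v : v \in gV (rR r1) -> ~~ delV r2 g2v (h1v v).
Proof.
move=> vR; case: (boolP (v \in gV (rK r1))) => vK.
  rewrite (dder_KV d1 vK); apply: (indep_notdelV d2 Hpi').
  by rewrite imV_in // (K_sub_LV vK).1.
apply/delVP=> [[w wL [wK E]]]; have := newV_notD d1 (newV_comatch h1v vR vK).
by rewrite -E (indep_inDV d1 (dder_match d2) Hpi wL).
Qed.
Lemma comatch1_notdelE v : v \in gE (rR r1) -> ~~ delE r2 g2e (h1e v).
Proof.
move=> vR; case: (boolP (v \in gE (rK r1))) => vK.
  rewrite (dder_KE d1 vK); apply: (indep_notdelE d2 Hpi').
  by rewrite imE_in //; case: (K_sub_LE vK).
apply/delEP=> [[w wL [wK E]]]; have := newE_notD d1 (newE_comatch h1e vR vK).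
by rewrite -E (indep_inDE d1 (dder_match d2) Hpi wL).
Qed.

Lemma seq_coverV x : x \in gV M1 -> [|| commonV x, newV r1 h1v x | newV r2 k2v x].
Proof.
move=> xM; case/orP: (dder_coverV dY xM) => [/andP[xH nd]|->]; last by rewrite !orbT.
case/orP: (dder_coverV d1 xH) => [D|->]; last by rewrite orbT.
by rewrite /commonV D nd.
Qed.
Lemma seq_coverE x : x \in gE M1 -> [|| commonE x, newE r1 h1e x | newE r2 k2e x].
Proof.
move=> xM; case/orP: (dder_coverE dY xM) => [/andP[xH nd]|->]; last by rewrite !orbT.
case/orP: (dder_coverE d1 xH) => [D|->]; last by rewrite orbT.
by rewrite /commonE D nd.
Qed.
Lemma commonV_in x : commonV x -> x \in gV M1 /\ lab M1 x = lab G x.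
Proof.
case/andP=> D nd; have [i1 i2] := dder_DV d1 D.
have D2 : inDV r2 H1 g2v x by rewrite /inDV i1.
by have [-> ->] := dder_DV dY D2.
Qed.
Lemma commonE_in x : commonE x ->
  [/\ x \in gE M1, src M1 x = src G x, tgt M1 x = tgt G x & mlab M1 x = mlab G x].
Proof.
case/andP=> D nd; have [i1 i2 i3 i4] := dder_DE d1 D.
have D2 : inDE r2 H1 g2e x by rewrite /inDE i1.
by have [-> -> -> ->] := dder_DE dY D2.
Qed.
Lemma comatch1_inV v : v \in gV (rR r1) -> h1v v \in gV M1 /\ lab M1 (h1v v) = lab (rR r1) v.
Proof.
move=> vR; have [i1 i2] := comatch_V d1 vR.
have D2 : inDV r2 H1 g2v (h1v v) by rewrite /inDV i1 comatch1_notdelV.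
by have [-> ->] := dder_DV dY D2.
Qed.
Lemma comatch1_inE v : v \in gE (rR r1) ->
  [/\ h1e v \in gE M1, src M1 (h1e v) = h1v (src (rR r1) v),
   tgt M1 (h1e v) = h1v (tgt (rR r1) v) & mlab M1 (h1e v) = mlab (rR r1) v].
Proof.
move=> vR; have [i1 i2 i3 i4] := comatch_E d1 vR.
have D2 : inDE r2 H1 g2e (h1e v) by rewrite /inDE i1 comatch1_notdelE.
by have [-> -> -> ->] := dder_DE dY D2.
Qed.
Lemma commonV_notnew x : commonV x -> ~~ newV r1 h1v x && ~~ newV r2 k2v x.
Proof.
case/andP=> D nd; apply/andP; split.
  by apply/negP=> N; have := newV_notD d1 N; rewrite D.
apply: contraL nd => N; have := newV_notD dY N.
by rewrite /inDV (dder_DV d1 D).1 /= negbK.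
Qed.
Lemma commonE_notnew x : commonE x -> ~~ newE r1 h1e x && ~~ newE r2 k2e x.
Proof.
case/andP=> D nd; apply/andP; split.
  by apply/negP=> N; have := newE_notD d1 N; rewrite D.
apply: contraL nd => N; have := newE_notD dY N.
by have [i1 _ _ _] := dder_DE d1 D; rewrite /inDE i1 /= negbK.
Qed.
Lemma new2_notnew1V x : newV r2 k2v x -> ~~ newV r1 h1v x.
Proof.
move=> N; apply/negP=> /invV_spec[i1 i2 i3].
by have := newV_notD dY N; rewrite -i3 /inDV (comatch_V d1 i1).1 comatch1_notdelV.
Qed.
Lemma new2_notnew1E x : newE r2 k2e x -> ~~ newE r1 h1e x.
Proof.
move=> N; apply/negP=> /invE_spec[i1 i2 i3].
have [j1 _ _ _] := comatch_E d1 i1.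
by have := newE_notD dY N; rewrite -i3 /inDE j1 comatch1_notdelE.
Qed.
Lemma commonE_ends e : commonE e -> commonV (src G e) && commonV (tgt G e).
Proof.
case/andP=> D nd; have [i1 i2 i3 i4] := dder_DE d1 D.
have D2 : inDE r2 H1 g2e e by rewrite /inDE i1.
case/andP: (dder_inDE_ends dY D2) => /andP[_ a] /andP[_ b].
move: a b; rewrite i2 i3 => a b.
by case/andP: (dder_inDE_ends d1 D) => c d; rewrite /commonV c d a b.
Qed.
Lemma K1_common v : v \in gV (rK r1) -> h1v v = g1v v /\ commonV (g1v v).
Proof.
move=> vK; split; first exact: (dder_KV d1 vK).
rewrite /commonV (K_inDV (dder_match d1) vK) /=; apply: (indep_notdelV d2 Hpi').
by rewrite imV_in // (K_sub_LV vK).1.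
Qed.
Lemma K2_common v : v \in gV (rK r2) -> k2v v = g2v v /\ commonV (g2v v).
Proof.
move=> vK; have vL := (K_sub_LV vK).1; split; first exact: (dder_KV dY vK).
by rewrite /commonV (indep_inDV d1 (dder_match d2) Hpi vL) (K_notdelV (dder_match d2) vK).
Qed.
Lemma commonV_sym x : commonV x = inDV r2 G g2v x && ~~ delV r1 g1v x.
Proof. by rewrite /commonV /inDV; case: (x \in gV G); case: delV; case: delV. Qed.
Lemma commonE_sym x : commonE x = inDE r2 G g2e x && ~~ delE r1 g1e x.
Proof. by rewrite /commonE /inDE; case: (x \in gE G); case: delE; case: delE. Qed.
End IndepSequence.

Section Diamond.
Variables (LV LE : finType) (r1 r2 : rule LV LE) (G H1 H2 M1 M2 : graph LV LE).
Variables (g1v g1e h1v h1e g2v g2e h2v h2e k1v k1e k2v k2e : nat -> nat).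
Hypothesis d1 : dder r1 G H1 g1v g1e h1v h1e.
Hypothesis d2 : dder r2 G H2 g2v g2e h2v h2e.
Hypothesis Hpi : par_indep r1 r2 g1v g1e g2v g2e.
Hypothesis dY1 : dder r2 H1 M1 g2v g2e k2v k2e.
Hypothesis dY2 : dder r1 H2 M2 g1v g1e k1v k1e.

Let Hpi' := par_indep_sym Hpi.
Let commonV12 x := commonV r1 r2 G g1v g2v x.
Let commonE12 x := commonE r1 r2 G g1e g2e x.
Let commonV12_sym x : commonV12 x = commonV r2 r1 G g2v g1v x := commonV_sym r1 r2 G g1v g2v x.
Let commonE12_sym x : commonE12 x = commonE r2 r1 G g2e g1e x := commonE_sym r1 r2 G g1e g2e x.

(* Both [M1] and [M2] consist of the items of [G] deleted by neither step and
   of the items created by the two steps; the isomorphism fixes the former and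
   exchanges the comatches of each rule. *)
Definition diamondV x :=
  if newV r1 h1v x then k1v (invV r1 h1v x) else if newV r2 k2v x then h2v (invV r2 k2v x) else x.
Definition diamondE x :=
  if newE r1 h1e x then k1e (invE r1 h1e x) else if newE r2 k2e x then h2e (invE r2 k2e x) else x.

Lemma diamondV_common x : commonV12 x -> diamondV x = x.
Proof. by move/(commonV_notnew d1 dY1)/andP=> [/negbTE a /negbTE b]; rewrite /diamondV a b. Qed.
Lemma diamondE_common x : commonE12 x -> diamondE x = x.
Proof. by move/(commonE_notnew d1 dY1)/andP=> [/negbTE a /negbTE b]; rewrite /diamondE a b. Qed.

Lemma diamondV_comatch1 v : v \in gV (rR r1) -> diamondV (h1v v) = k1v v.
Proof.
move=> vR; case: (boolP (v \in gV (rK r1))) => vK.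
  have [-> a] := K1_common d1 d2 Hpi vK; rewrite diamondV_common //.
  by have [-> _] := K2_common d2 d1 Hpi' dY2 vK.
by rewrite /diamondV (newV_comatch h1v vR vK) invV_comatch //; exact: comatch_injV d1.
Qed.
Lemma diamondE_comatch1 v : v \in gE (rR r1) -> diamondE (h1e v) = k1e v.
Proof.
move=> vR; case: (boolP (v \in gE (rK r1))) => vK.
  rewrite (dder_KE d1 vK) diamondE_common ?(dder_KE dY2 vK) //.
  rewrite /commonE12 /commonE (K_inDE (dder_match d1) vK) /=.
  by apply: (indep_notdelE d2 Hpi'); rewrite imE_in //; case: (K_sub_LE vK).
by rewrite /diamondE (newE_comatch h1e vR vK) invE_comatch //; exact: comatch_injE d1.
Qed.
Lemma diamondV_comatch2 v : v \in gV (rR r2) -> diamondV (k2v v) = h2v v.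
Proof.
move=> vR; case: (boolP (v \in gV (rK r2))) => vK.
  have [-> a] := K2_common d1 d2 Hpi dY1 vK; rewrite diamondV_common //.
  by have [-> _] := K1_common d2 d1 Hpi' vK.
have N := newV_comatch k2v vR vK.
rewrite /diamondV (negbTE (new2_notnew1V d1 d2 Hpi dY1 N)) N invV_comatch //.
exact: comatch_injV dY1.
Qed.
Lemma diamondE_comatch2 v : v \in gE (rR r2) -> diamondE (k2e v) = h2e v.
Proof.
move=> vR; case: (boolP (v \in gE (rK r2))) => vK.
  have [vL _ _ _] := K_sub_LE vK.
  rewrite (dder_KE dY1 vK) diamondE_common ?(dder_KE d2 vK) //.
  rewrite /commonE12 /commonE (indep_inDE d1 (dder_match d2) Hpi vL).
  exact: (K_notdelE (dder_match d2) vK).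
have N := newE_comatch k2e vR vK.
rewrite /diamondE (negbTE (new2_notnew1E d1 d2 Hpi dY1 N)) N invE_comatch //.
exact: comatch_injE dY1.
Qed.

Lemma diamondV_cases x : x \in gV M1 ->
  [\/ commonV12 x /\ diamondV x = x,
      exists2 v, (v \in gV (rR r1)) && (v \notin gV (rK r1)) & x = h1v v /\ diamondV x = k1v v |
      exists2 v, (v \in gV (rR r2)) && (v \notin gV (rK r2)) & x = k2v v /\ diamondV x = h2v v].
Proof.
move/(seq_coverV d1 dY1)=> /or3P[a|/invV_spec[i1 i2 i3]|/invV_spec[i1 i2 i3]].
- by apply: Or31; rewrite diamondV_common.
- apply: Or32; exists (invV r1 h1v x); rewrite ?i1 ?i2 //.
  by rewrite -[in diamondV x]i3 diamondV_comatch1.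
- apply: Or33; exists (invV r2 k2v x); rewrite ?i1 ?i2 //.
  by rewrite -[in diamondV x]i3 diamondV_comatch2.
Qed.
Lemma diamondE_cases x : x \in gE M1 ->
  [\/ commonE12 x /\ diamondE x = x,
      exists2 v, (v \in gE (rR r1)) && (v \notin gE (rK r1)) & x = h1e v /\ diamondE x = k1e v |
      exists2 v, (v \in gE (rR r2)) && (v \notin gE (rK r2)) & x = k2e v /\ diamondE x = h2e v].
Proof.
move/(seq_coverE d1 dY1)=> /or3P[a|/invE_spec[i1 i2 i3]|/invE_spec[i1 i2 i3]].
- by apply: Or31; rewrite diamondE_common.
- apply: Or32; exists (invE r1 h1e x); rewrite ?i1 ?i2 //.
  by rewrite -[in diamondE x]i3 diamondE_comatch1.
- apply: Or33; exists (invE r2 k2e x); rewrite ?i1 ?i2 //.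
  by rewrite -[in diamondE x]i3 diamondE_comatch2.
Qed.

Let diamond_morph : morph M1 M2 diamondV diamondE.
Proof.
split.
- move=> x /diamondV_cases [[a ->]|[v /andP[vR vK] [-> ->]]|[v /andP[vR vK] [-> ->]]].
  + have a' : commonV r2 r1 G g2v g1v x by rewrite -commonV12_sym.
    by have [-> ->] := commonV_in d2 dY2 a'; rewrite (commonV_in d1 dY1 a).2.
  + by rewrite (comatch_V dY2 vR).1 (comatch_V dY2 vR).2 (comatch1_inV d1 d2 Hpi dY1 vR).2.
  + have [-> ->] := comatch1_inV d2 d1 Hpi' dY2 vR.
    by rewrite (comatch_V dY1 vR).2.
- move=> x /diamondE_cases [[a ->]|[v /andP[vR vK] [-> ->]]|[v /andP[vR vK] [-> ->]]].
  + have a' : commonE r2 r1 G g2e g1e x by rewrite -commonE12_sym.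
    have [-> -> -> ->] := commonE_in d2 dY2 a'; have [_ -> -> ->] := commonE_in d1 dY1 a.
    by case/andP: (commonE_ends d1 dY1 a) => s t; rewrite !diamondV_common.
  + have [-> -> -> ->] := comatch_E dY2 vR; have [_ -> -> ->] := comatch1_inE d1 d2 Hpi dY1 vR.
    by rewrite !diamondV_comatch1 ?src_in ?tgt_in.
  + have [-> -> -> ->] := comatch1_inE d2 d1 Hpi' dY2 vR; have [_ -> -> ->] := comatch_E dY1 vR.
    by rewrite !diamondV_comatch2 ?src_in ?tgt_in.
Qed.

Let diamond_injV : {in gV M1 &, injective diamondV}.
Proof.
have nA y : commonV r2 r1 G g2v g1v y -> ~~ newV r2 h2v y && ~~ newV r1 k1v y :=
  commonV_notnew d2 dY2 (x := y).
have n12 y : newV r1 k1v y -> ~~ newV r2 h2v y := new2_notnew1V d2 d1 Hpi' dY2 (x := y).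
have AimA y : commonV12 y -> commonV r2 r1 G g2v g1v y by rewrite commonV12_sym.
move=> x y /diamondV_cases cx /diamondV_cases cy.
case: cx => [[a ->]|[v /andP[vR vK] [-> ->]]|[v /andP[vR vK] [-> ->]]];
case: cy => [[b ->]|[w /andP[wR wK] [-> ->]]|[w /andP[wR wK] [-> ->]]] //.
- by move=> E; have := nA _ (AimA _ a); rewrite E (newV_comatch k1v wR wK) andbF.
- by move=> E; have := nA _ (AimA _ a); rewrite E (newV_comatch h2v wR wK).
- by move=> E; have := nA _ (AimA _ b); rewrite -E (newV_comatch k1v vR vK) andbF.
- by move/(comatch_injV dY2 vR wR) ->.
- by move=> E; have := n12 _ (newV_comatch k1v vR vK); rewrite E (newV_comatch h2v wR wK).
- by move=> E; have := nA _ (AimA _ b); rewrite -E (newV_comatch h2v vR vK).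
- by move=> E; have := n12 _ (newV_comatch k1v wR wK); rewrite -E (newV_comatch h2v vR vK).
- by move/(comatch_injV d2 vR wR) ->.
Qed.

Let diamond_injE : {in gE M1 &, injective diamondE}.
Proof.
have nA y : commonE r2 r1 G g2e g1e y -> ~~ newE r2 h2e y && ~~ newE r1 k1e y :=
  commonE_notnew d2 dY2 (x := y).
have n12 y : newE r1 k1e y -> ~~ newE r2 h2e y := new2_notnew1E d2 d1 Hpi' dY2 (x := y).
have AimA y : commonE12 y -> commonE r2 r1 G g2e g1e y by rewrite commonE12_sym.
move=> x y /diamondE_cases cx /diamondE_cases cy.
case: cx => [[a ->]|[v /andP[vR vK] [-> ->]]|[v /andP[vR vK] [-> ->]]];
case: cy => [[b ->]|[w /andP[wR wK] [-> ->]]|[w /andP[wR wK] [-> ->]]] //.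
- by move=> E; have := nA _ (AimA _ a); rewrite E (newE_comatch k1e wR wK) andbF.
- by move=> E; have := nA _ (AimA _ a); rewrite E (newE_comatch h2e wR wK).
- by move=> E; have := nA _ (AimA _ b); rewrite -E (newE_comatch k1e vR vK) andbF.
- by move/(comatch_injE dY2 vR wR) ->.
- by move=> E; have := n12 _ (newE_comatch k1e vR vK); rewrite E (newE_comatch h2e wR wK).
- by move=> E; have := nA _ (AimA _ b); rewrite -E (newE_comatch h2e vR vK).
- by move=> E; have := n12 _ (newE_comatch k1e wR wK); rewrite -E (newE_comatch h2e vR vK).
- by move/(comatch_injE d2 vR wR) ->.
Qed.

Lemma diamond_iso : iso_by M1 M2 diamondV diamondE.
Proof.
split; first by split; [exact: diamond_morph | exact: diamond_injV | exact: diamond_injE].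
- move=> y /(seq_coverV d2 dY2)/or3P[a|/invV_spec[i1 i2 i3]|/invV_spec[i1 i2 i3]].
  + rewrite -commonV12_sym in a.
    by exists y; [exact: (commonV_in d1 dY1 a).1 | rewrite diamondV_common].
  + by exists (k2v (invV r2 h2v y)); [exact: (comatch_V dY1 i1).1 | rewrite diamondV_comatch2].
  + exists (h1v (invV r1 k1v y)); last by rewrite diamondV_comatch1.
    exact: (comatch1_inV d1 d2 Hpi dY1 i1).1.
- move=> y /(seq_coverE d2 dY2)/or3P[a|/invE_spec[i1 i2 i3]|/invE_spec[i1 i2 i3]].
  + rewrite -commonE12_sym in a.
    by exists y; [case: (commonE_in d1 dY1 a) | rewrite diamondE_common].
  + by exists (k2e (invE r2 h2e y)); [by case: (comatch_E dY1 i1) | rewrite diamondE_comatch2].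
  + exists (h1e (invE r1 k1e y)); last by rewrite diamondE_comatch1.
    by case: (comatch1_inE d1 d2 Hpi dY1 i1).
Qed.
End Diamond.

Definition attachment (LV LE : finType) (G : graph LV LE) (pV pE : pred nat) s :=
  pV s /\ exists2 e, (e \in gE G) && ~~ pE e & s = src G e \/ s = tgt G e.

Section Extension.
Variables (LV LE : finType) (G M : graph LV LE) (pV pE : pred nat) (t0 : nat -> option nat).
Hypothesis hZ : forall s, attachment G pV pE s -> exists2 m, t0 s = Some m & m \in gV M.

(* [ext_graph]: [M] together with a fresh copy [fresh + y] of every item [y] of
   [G] outside [pV, pE], attached to [M] along [t0]; the default [0] in
   [ext_end] is never used, by [hZ]. *)
Definition ext_end y := if pV y then odflt 0 (t0 y) else fresh (gV M) + y.
Definition extV := gV M ++ [seq fresh (gV M) + x | x <- [seq x <- gV G | ~~ pV x]].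
Definition extE := gE M ++ [seq fresh (gE M) + x | x <- [seq x <- gE G | ~~ pE x]].
Definition ext_src e := if fresh (gE M) <= e then ext_end (src G (e - fresh (gE M))) else src M e.
Definition ext_tgt e := if fresh (gE M) <= e then ext_end (tgt G (e - fresh (gE M))) else tgt M e.
Definition ext_lab x := if fresh (gV M) <= x then lab G (x - fresh (gV M)) else lab M x.
Definition ext_mlab x := if fresh (gE M) <= x then mlab G (x - fresh (gE M)) else mlab M x.

Lemma mem_extV x : (x \in extV) =
  (x \in gV M) || has (fun y => (y \in gV G) && ~~ pV y && (fresh (gV M) + y == x)) (gV G).
Proof.
rewrite mem_cat; congr (_ || _); apply/mapP/hasP=> [[y]|[y yG /andP[/andP[_ py] /eqP <-]]].
  by rewrite mem_filter => /andP[py yG] ->; exists y; rewrite // yG py eqxx.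
by exists y; rewrite // mem_filter py.
Qed.
Lemma mem_extE x : (x \in extE) =
  (x \in gE M) || has (fun y => (y \in gE G) && ~~ pE y && (fresh (gE M) + y == x)) (gE G).
Proof.
rewrite mem_cat; congr (_ || _); apply/mapP/hasP=> [[y]|[y yG /andP[/andP[_ py] /eqP <-]]].
  by rewrite mem_filter => /andP[py yG] ->; exists y; rewrite // yG py eqxx.
by exists y; rewrite // mem_filter py.
Qed.

Lemma ctxV_ext y : y \in gV G -> ~~ pV y -> fresh (gV M) + y \in extV.
Proof.
by move=> yG py; rewrite mem_extV; apply/orP; right; apply/hasP; exists y; rewrite // yG py eqxx.
Qed.
Lemma ctxE_ext y : y \in gE G -> ~~ pE y -> fresh (gE M) + y \in extE.
Proof.
by move=> yG py; rewrite mem_extE; apply/orP; right; apply/hasP; exists y; rewrite // yG py eqxx.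
Qed.

Lemma ext_end_in e : e \in gE G -> ~~ pE e ->
  (ext_end (src G e) \in extV) && (ext_end (tgt G e) \in extV).
Proof.
move=> eG pe.
have H s : s = src G e \/ s = tgt G e -> s \in gV G -> ext_end s \in extV.
  move=> hs sG; rewrite /ext_end; case: ifPn => ps; last exact: ctxV_ext.
  have [m -> mM] := hZ (conj ps (ex_intro2 _ _ e (introT andP (conj eG pe)) hs)).
  by rewrite mem_cat mM.
by rewrite !H ?src_in ?tgt_in //; [right|left].
Qed.

Lemma ext_wf e : e \in extE -> (ext_src e \in extV) && (ext_tgt e \in extV).
Proof.
rewrite mem_extE => /orP[eM|/hasP[y yG /andP[/andP[_ py] /eqP <-]]].
  by rewrite /ext_src /ext_tgt fresh_notin // !mem_cat src_in ?tgt_in.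
by rewrite /ext_src /ext_tgt leq_addr addKn ext_end_in.
Qed.

Definition ext_graph := @Graph LV LE extV extE ext_src ext_tgt ext_lab ext_mlab ext_wf.

Lemma ext_graph_incl : inj_morph M ext_graph id id.
Proof.
split=> //; split=> x xM /=.
  by rewrite mem_cat xM /ext_lab fresh_notin.
by rewrite mem_cat xM /ext_src /ext_tgt /ext_mlab fresh_notin.
Qed.
End Extension.

Section ExtendSide.
Variables (LV LE : finType) (r : rule LV LE) (G H M : graph LV LE) (gv ge hv he : nat -> nat).
Hypothesis dd : dder r G H gv ge hv he.
Variables (pV pE : pred nat).
Hypothesis hG : forall e, e \in gE G -> pE e -> pV (src G e) && pV (tgt G e).
Hypothesis HpV : {in gV (rL r), forall v, pV (gv v)}.
Hypothesis HpE : {in gE (rL r), forall v, pE (ge v)}.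
Variables (t0 t : nat -> option nat).
Hypothesis hZ : forall s, attachment G pV pE s -> exists2 m, t0 s = Some m & m \in gV M.
Hypothesis ht : forall s, attachment G pV pE s -> t s = t0 s.

Let Hsub := Hres dd hG HpV.

Lemma ctx_inDV y : y \in gV G -> ~~ pV y -> inDV r G gv y.
Proof.
move=> yG py; rewrite /inDV yG /=; apply/negP=> /delVP [v vL [_ E]].
by move: py; rewrite -E HpV.
Qed.
Lemma ctx_inDE y : y \in gE G -> ~~ pE y -> inDE r G ge y.
Proof.
move=> yG py; rewrite /inDE yG /=; apply/negP=> /delEP [v vL [_ E]].
by move: py; rewrite -E HpE.
Qed.

Lemma notin_HresV y : y \in gV H -> (y \notin gV Hsub) = (y \in gV G) && ~~ pV y.
Proof.
move=> yH; rewrite /Hsub /= mem_filter yH andbT /keepV.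
case/orP: (dder_coverV dd yH) => [D|N].
  have nN : newV r hv y = false by apply/negP=> N; have := newV_notD dd N; rewrite D.
  by rewrite D nN orbF /=; case/andP: D => ->.
rewrite N orbT /=; apply/esym/negP=> /andP[yG py].
by have := newV_notD dd N; rewrite ctx_inDV.
Qed.
Lemma notin_HresE y : y \in gE H -> (y \notin gE Hsub) = (y \in gE G) && ~~ pE y.
Proof.
move=> yH; rewrite /Hsub /= mem_filter yH andbT /keepE.
case/orP: (dder_coverE dd yH) => [D|N].
  have nN : newE r he y = false by apply/negP=> N; have := newE_notD dd N; rewrite D.
  by rewrite D nN orbF /=; case/andP: D => ->.
rewrite N orbT /=; apply/esym/negP=> /andP[yG py].
by have := newE_notD dd N; rewrite ctx_inDE.
Qed.

Let ext_glue_end y s : y \in gE G -> ~~ pE y -> s = src G y \/ s = tgt G y ->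
  inDV r G gv s -> glue_end Hsub id t id (addn (fresh (gV M))) s (ext_end M pV t0 s).
Proof.
move=> yG py hs Ds; have sG : s \in gV G by case/andP: Ds.
split; first by rewrite imV_id notin_HresV ?(dder_DV dd Ds).1 // sG /= /ext_end => /negbTE->.
move=> x xHr /= Ex; subst s.
have px : pV x.
  move: xHr; rewrite /Hsub /= mem_filter /keepV => /andP[/orP[/andP[_ ->]//|N] _].
  by have := newV_notD dd N; rewrite Ds.
have att : attachment G pV pE x by split=> //; exists y; rewrite ?yG.
have [m e1 _] := hZ att.
by exists m; rewrite ?ht // /ext_end px e1.
Qed.

Lemma ext_glue :
  glue Hsub H M (ext_graph hZ) id id t id id (addn (fresh (gV M))) (addn (fresh (gE M))).
Proof.
have ctxV y : y \in gV H -> ~~ imV Hsub id y -> (y \in gV G) && ~~ pV y.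
  by move=> yH; rewrite imV_id notin_HresV.
have ctxE y : y \in gE H -> ~~ imE Hsub id y -> (y \in gE G) && ~~ pE y.
  by move=> yH; rewrite imE_id notin_HresE.
split.
- exact: ext_graph_incl.
- move=> y yH /(ctxV _ yH) /andP[yG py]; rewrite /= ctxV_ext // imV_id.
  rewrite /ext_lab leq_addr addKn (dder_DV dd (ctx_inDV yG py)).2; split=> //.
  by apply/negP=> /fresh_notin; rewrite leq_addr.
- by move=> y1 y2 _ _ _ _ /addnI.
- move=> z /=; rewrite mem_extV => /orP[zM|/hasP[y yG /andP[/andP[_ py] /eqP <-]]].
    by left; rewrite imV_id.
  right; exists y => //; have yH := (dder_DV dd (ctx_inDV yG py)).1.
  by rewrite yH imV_id notin_HresV // yG py.
- move=> y yH /(ctxE _ yH) /andP[yG py]; rewrite /= ctxE_ext // imE_id.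
  have [_ _ _ ->] := dder_DE dd (ctx_inDE yG py).
  rewrite /ext_mlab leq_addr addKn; split=> //.
  by apply/negP=> /fresh_notin; rewrite leq_addr.
- by move=> y1 y2 _ _ _ _ /addnI.
- move=> z /=; rewrite mem_extE => /orP[zM|/hasP[y yG /andP[/andP[_ py] /eqP <-]]].
    by left; rewrite imE_id.
  right; exists y => //; have [yH _ _ _] := dder_DE dd (ctx_inDE yG py).
  by rewrite yH imE_id notin_HresE // yG py.
- move=> y yH /(ctxE _ yH) /andP[yG py]; have De := ctx_inDE yG py.
  have [_ -> -> _] := dder_DE dd De; case/andP: (dder_inDE_ends dd De) => Ds Dt.
  by rewrite /= /ext_src /ext_tgt leq_addr !addKn; split; apply: (ext_glue_end yG py); tauto.
Qed.
End ExtendSide.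

Section Joinability.
Variables (LV LE : finType) (T : gts LV LE) (i1 i2 : gts_I T) (G H1 H2 : graph LV LE).
Variables (g1v g1e h1v h1e g2v g2e h2v h2e : nat -> nat).
Let r1 := gts_rule i1.
Let r2 := gts_rule i2.
Hypothesis d1 : dder r1 G H1 g1v g1e h1v h1e.
Hypothesis d2 : dder r2 G H2 g2v g2e h2v h2e.

Lemma par_indep_joinable : par_indep r1 r2 g1v g1e g2v g2e -> joinable T H1 H2.
Proof.
move=> Hpi; have Hpi' := par_indep_sym Hpi.
have [M1 [k2v [k2e dY1]]] := dder_exists (indep_match d1 (dder_match d2) Hpi)
  (indep_dangling d1 (dder_match d2) (dder_dangling d2) Hpi).
have [M2 [k1v [k1e dY2]]] := dder_exists (indep_match d2 (dder_match d1) Hpi')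
  (indep_dangling d2 (dder_match d1) (dder_dangling d1) Hpi').
exists M2; do 2 eexists; split.
  by apply: (derivs_step dY1); apply: derivs_iso; exact: diamond_iso d1 d2 Hpi dY1 dY2.
by apply: (derivs_step dY2); apply: derivs_iso; exact: iso_by_id.
Qed.

Lemma same_match_joinable : i1 = i2 ->
  {in gV (rL r1), g1v =1 g2v} -> {in gE (rL r1), g1e =1 g2e} -> joinable T H1 H2.
Proof.
move=> Ei Ev Ee; have d2' : dder r1 G H2 g2v g2e h2v h2e by rewrite /r1 Ei.
exists H2; do 2 eexists; split; apply: derivs_iso; last exact: iso_by_id.
exact: same_match_iso d1 d2' Ev Ee.
Qed.

Section CriticalCase.
Definition unionV x := imV (rL r1) g1v x || imV (rL r2) g2v x.
Definition unionE x := imE (rL r1) g1e x || imE (rL r2) g2e x.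

Lemma union_ends e : e \in gE G -> unionE e -> unionV (src G e) && unionV (tgt G e).
Proof.
move=> eG /orP[/imEP[e0 e0L <-]|/imEP[e0 e0L <-]].
  have [_ -> -> _] := injm_E (dder_match d1) e0L.
  by rewrite /unionV !imV_in ?src_in ?tgt_in.
have [_ -> -> _] := injm_E (dder_match d2) e0L.
by rewrite /unionV !imV_in ?src_in ?tgt_in ?orbT.
Qed.

Lemma union1V : {in gV (rL r1), forall v, unionV (g1v v)}.
Proof. by move=> v vL; rewrite /unionV imV_in. Qed.
Lemma union1E : {in gE (rL r1), forall e, unionE (g1e e)}.
Proof. by move=> e eL; rewrite /unionE imE_in. Qed.
Lemma union2V : {in gV (rL r2), forall v, unionV (g2v v)}.
Proof. by move=> v vL; rewrite /unionV imV_in ?orbT. Qed.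
Lemma union2E : {in gE (rL r2), forall e, unionE (g2e e)}.
Proof. by move=> e eL; rewrite /unionE imE_in ?orbT. Qed.

Let Gc := restrict union_ends.
Let H1c := Hres d1 union_ends union1V.
Let H2c := Hres d2 union_ends union2V.

Lemma critical_restriction :
  ~ par_indep r1 r2 g1v g1e g2v g2e ->
  ~ [/\ i1 = i2, {in gV (rL r1), g1v =1 g2v} & {in gE (rL r1), g1e =1 g2e}] ->
  critical_pair i1 i2 Gc H1c H2c g1v g1e h1v h1e g2v g2e h2v h2e.
Proof.
move=> Hpi Hsame; split; [exact (restrict_dder d1 union_ends union1V union1E)
       | exact (restrict_dder d2 union_ends union2V union2E) | | by [] |].
  by split=> x; rewrite /= mem_filter => /andP[].
by move=> Ei [Ev Ee]; apply: Hsame.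
Qed.

(* An attachment node lies in both matches only as an item of [K]: the
   dangling condition forbids deleting a node with a context edge. *)
Lemma attachment_inDV (i : gts_I T) gv ge H hv he :
  dder (gts_rule i) G H gv ge hv he ->
  (forall e, imE (rL (gts_rule i)) ge e -> unionE e) ->
  forall s, attachment G unionV unionE s -> inDV (gts_rule i) Gc gv s.
Proof.
move=> dd Hp s [ps [e /andP[eG pe] hs]].
have sG : s \in gV G by case: hs => ->; [exact: src_in | exact: tgt_in].
rewrite /inDV /= mem_filter ps sG /=; apply/negP => /delVP[v vL [vK E]].
have nh : ~~ has (fun e' => ge e' == e) (gE (rL (gts_rule i))).
  by apply: contra pe => h; apply: Hp.
have [a b] := dder_dangling dd eG nh vL vK.
by case: hs => Es; [apply: a|apply: b]; rewrite -Es E.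
Qed.

Lemma attachment_persistent s : attachment G unionV unionE s -> persistent i1 i2 Gc g1v g2v s.
Proof.
move=> att; have [ps [e /andP[eG _] hs]] := att.
have sG : s \in gV G by case: hs => ->; [exact: src_in | exact: tgt_in].
rewrite /persistent /= mem_filter ps sG.
have in1 x : imE (rL r1) g1e x -> unionE x by rewrite /unionE => ->.
have in2 x : imE (rL r2) g2e x -> unionE x by rewrite /unionE orbC => ->.
by rewrite (attachment_inDV d1 in1 att) (attachment_inDV d2 in2 att).
Qed.

Lemma strongly_joinable_restriction_joinable :
  strongly_joinable i1 i2 Gc H1c H2c g1v g2v -> joinable T H1 H2.
Proof.
case=> M [t1 [t2 [dj1 dj2 Hp]]].
have tracks s : attachment G unionV unionE s -> exists2 m, t1 s = Some m & t2 s = Some m.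
  move=> att; have := Hp s (attachment_persistent att).
  case/andP: (attachment_persistent att) => /andP[_ D1] D2.
  rewrite /= /step_track D1 D2 /=.
  by case: (t1 s) => [m|] [] // _ <-; exists m.
have hZ s : attachment G unionV unionE s -> exists2 m, t1 s = Some m & m \in gV M.
  by case/tracks=> m e1 _; exists m => //; exact: derivs_track_in dj1 e1.
have ht2 s : attachment G unionV unionE s -> t2 s = t1 s by case/tracks=> m -> ->.
have [t1' j1] := derivs_extend dj1 (Hres_incl d1 union_ends union1V)
  (ext_glue d1 union_ends union1V union1E hZ (fun _ _ => erefl)).
have [t2' j2] := derivs_extend dj2 (Hres_incl d2 union_ends union2V)
  (ext_glue d2 union_ends union2V union2E hZ ht2).
by exists (ext_graph hZ), t1', t2'.
Qed.
End CriticalCase.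
End Joinability.

Theorem theorem5p2 (LV LE : finType) (T : gts LV LE) (D : graph LV LE -> Prop) :
  (forall (i1 i2 : gts_I T) (G H1 H2 : graph LV LE)
          (g1v g1e h1v h1e g2v g2e h2v h2e : nat -> nat),
      critical_pair i1 i2 G H1 H2 g1v g1e h1v h1e g2v g2e h2v h2e ->
      sclosure D G ->
      strongly_joinable i1 i2 G H1 H2 g1v g2v) ->
  locally_confluent_on T D.
Proof.
move=> Hcp G H1 H2 DG [i1 [g1v [g1e [h1v [h1e d1]]]]] [i2 [g2v [g2e [h2v [h2e d2]]]]].
have [Hpi|Hdep] := classic (par_indep (gts_rule i1) (gts_rule i2) g1v g1e g2v g2e).
  exact: par_indep_joinable d1 d2 Hpi.
have [[Ei Ev Ee]|Hdiff] := classic [/\ i1 = i2, {in gV (rL (gts_rule i1)), g1v =1 g2v}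
                                     & {in gE (rL (gts_rule i1)), g1e =1 g2e}].
  exact: same_match_joinable d1 d2 Ei Ev Ee.
apply: (strongly_joinable_restriction_joinable (d1 := d1) (d2 := d2)); apply: Hcp.
  exact: critical_restriction Hdep Hdiff.
exact: scl_sub (scl_base DG) (restrict_sub _).
Qed.
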